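(* (i) If $X$ is a real Banach space with a shrinking 1-unconditional finite-dimensional decomposition, then $X$ has property (au$^*$). (ii) If $Y$ is a separable real Banach space with property (au$^*$), then every closed subspace $X$ of $Y$ and every quotient $Y/Z$ of $Y$ by a closed subspace $Z$ has property (au$^*$).
   Context: All Banach spaces are real. A separable Banach space $X$ has property (au$^*$) if $\lim_{n\to\infty}(\|x^*+x_n^*\|-\|x^*-x_n^*\|)=0$ whenever $x^*\in X^*$ and $(x_n^* )_{n\ge1}$ is a weak$^*$-null sequence in $X^*$. A finite-dimensional decomposition (FDD) of $Y$ is a sequence of finite-rank projections $(Q_j)_{j\ge1}$ with $Q_iQ_j=0$ for $i\ne j$ and $y=\sum_j Q_jy$ for all $y\in Y$; it is a 1-unconditional FDD (1-UFDD) if $\|\sum_{j=1}^n\epsilon_jQ_jy\|\le\|y\|$ for all $y$, all $n$ and all signs $\epsilon_j=\pm1$ (so the series converge unconditionally); it is shrinking if $x^*=\sum_j Q_j^*x^*$ in norm for every $x^*\in Y^*$. *)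

From Stdlib Require Import Reals Lra Classical ClassicalEpsilon ProofIrrelevance.
Open Scope R_scope.

Record NormedSpace := mkNS {
  V :> Type;
  vzero : V;
  vadd : V -> V -> V;
  vopp : V -> V;
  vscal : R -> V -> V;
  vnorm : V -> R;
  vadd_assoc : forall x y z, vadd x (vadd y z) = vadd (vadd x y) z;
  vadd_comm : forall x y, vadd x y = vadd y x;
  vadd_0l : forall x, vadd vzero x = x;
  vadd_oppr : forall x, vadd x (vopp x) = vzero;
  vscal_addl : forall a b x, vscal (a + b) x = vadd (vscal a x) (vscal b x);
  vscal_addr : forall a x y, vscal a (vadd x y) = vadd (vscal a x) (vscal a y);
  vscal_assoc : forall a b x, vscal a (vscal b x) = vscal (a * b) x;
  vscal_1 : forall x, vscal 1 x = x;
  vnorm_triangle : forall x y, vnorm (vadd x y) <= vnorm x + vnorm y;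
  vnorm_scal : forall a x, vnorm (vscal a x) = Rabs a * vnorm x;
  vnorm_eq0 : forall x, vnorm x = 0 -> x = vzero
}.

Arguments vzero {_}.
Arguments vadd {_} _ _.
Arguments vopp {_} _.
Arguments vscal {_} _ _.
Arguments vnorm {_} _.

Definition vsub {X : NormedSpace} (x y : X) : X := vadd x (vopp y).

Fixpoint vsum {X : NormedSpace} (f : nat -> X) (n : nat) : X :=
  match n with O => vzero | S m => vadd (vsum f m) (f m) end.

Fixpoint rsum (f : nat -> R) (n : nat) : R :=
  match n with O => 0 | S m => rsum f m + f m end.

Definition conv {X : NormedSpace} (u : nat -> X) (l : X) : Prop :=
  forall eps, eps > 0 -> exists N, forall n, (N <= n)%nat -> vnorm (vsub (u n) l) < eps.

Definition cauchy {X : NormedSpace} (u : nat -> X) : Prop :=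
  forall eps, eps > 0 -> exists N, forall m n, (N <= m)%nat -> (N <= n)%nat ->
    vnorm (vsub (u m) (u n)) < eps.

Definition Banach (X : NormedSpace) : Prop :=
  forall u : nat -> X, cauchy u -> exists l, conv u l.

Definition separable (X : NormedSpace) : Prop :=
  exists d : nat -> X, forall x eps, eps > 0 -> exists n, vnorm (vsub x (d n)) < eps.

Definition linear_functional {X : NormedSpace} (f : X -> R) : Prop :=
  (forall x y, f (vadd x y) = f x + f y) /\ (forall a x, f (vscal a x) = a * f x).

(** elements of X^*: bounded (= continuous) linear functionals *)
Definition dual_elem {X : NormedSpace} (f : X -> R) : Prop :=
  linear_functional f /\ exists C, forall x, Rabs (f x) <= C * vnorm x.

Definition dnorm {X : NormedSpace} (f : X -> R) : R :=
  epsilon (inhabits 0) (is_lub (fun t => exists x : X, vnorm x <= 1 /\ t = Rabs (f x))).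

(** property (au^* ) (defined for separable spaces) *)
Definition has_au_star (X : NormedSpace) : Prop :=
  separable X /\
  forall (xs : X -> R) (xn : nat -> X -> R),
    dual_elem xs -> (forall n, dual_elem (xn n)) ->
    (forall x, Un_cv (fun n => xn n x) 0) ->
    Un_cv (fun n => dnorm (fun x => xs x + xn n x) - dnorm (fun x => xs x - xn n x)) 0.

Definition linear_op {X : NormedSpace} (T : X -> X) : Prop :=
  (forall x y, T (vadd x y) = vadd (T x) (T y)) /\ (forall a x, T (vscal a x) = vscal a (T x)).

Definition bounded_op {X : NormedSpace} (T : X -> X) : Prop :=
  exists C, forall x, vnorm (T x) <= C * vnorm x.

Definition finite_rank {X : NormedSpace} (T : X -> X) : Prop :=
  exists (m : nat) (v : nat -> X), forall x, exists c : nat -> R,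
    T x = vsum (fun i => vscal (c i) (v i)) m.

(** FDD (Q_j)_{j>=0} (indexed from 0 instead of 1) *)
Definition is_FDD (X : NormedSpace) (Q : nat -> X -> X) : Prop :=
  (forall j, linear_op (Q j) /\ bounded_op (Q j) /\ finite_rank (Q j)) /\
  (forall j x, Q j (Q j x) = Q j x) /\
  (forall i j x, i <> j -> Q i (Q j x) = vzero) /\
  (forall y, conv (fun n => vsum (fun j => Q j y) n) y).

Definition is_1UFDD (X : NormedSpace) (Q : nat -> X -> X) : Prop :=
  is_FDD X Q /\
  forall (y : X) (n : nat) (eps : nat -> bool),
    vnorm (vsum (fun j => vscal (if eps j then 1 else -1) (Q j y)) n) <= vnorm y.

Definition shrinking_FDD (X : NormedSpace) (Q : nat -> X -> X) : Prop :=
  forall f : X -> R, dual_elem f ->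
    Un_cv (fun n => dnorm (fun x => f x - rsum (fun j => f (Q j x)) n)) 0.

Definition closed_subspace (Y : NormedSpace) (P : Y -> Prop) : Prop :=
  P vzero /\ (forall x y, P x -> P y -> P (vadd x y)) /\
  (forall a x, P x -> P (vscal a x)) /\
  (forall u l, (forall n, P (u n)) -> conv u l -> P l).

Lemma vscal_0 (X : NormedSpace) (x : X) : vscal 0 x = vzero.
Proof.
  assert (H : vadd (vscal 0 x) (vscal 0 x) = vscal 0 x).
  { rewrite <- vscal_addl. now rewrite Rplus_0_l. }
  assert (H2 : vadd (vadd (vscal 0 x) (vscal 0 x)) (vopp (vscal 0 x)) =
               vadd (vscal 0 x) (vopp (vscal 0 x))) by now rewrite H.
  rewrite <- vadd_assoc, !vadd_oppr, vadd_comm, vadd_0l in H2. exact H2.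
Qed.

Lemma vopp_scal (X : NormedSpace) (x : X) : vopp x = vscal (-1) x.
Proof.
  assert (H : vadd x (vscal (-1) x) = vzero).
  { rewrite <- (vscal_1 X x) at 1. rewrite <- vscal_addl.
    replace (1 + -1) with 0 by ring. apply vscal_0. }
  rewrite <- (vadd_0l X (vopp x)), <- H, (vadd_comm X x), <- vadd_assoc,
    vadd_oppr, vadd_comm, vadd_0l. reflexivity.
Qed.

Section Sub.
Variables (Y : NormedSpace) (P : Y -> Prop) (HP : closed_subspace Y P).

Let S := {y : Y | P y}.
Lemma sub_eq (a b : S) : proj1_sig a = proj1_sig b -> a = b.
Proof. destruct a, b; simpl; intros ->; f_equal; apply proof_irrelevance. Qed.

Definition sub_zero : S := exist _ vzero (proj1 HP).
Definition sub_add (a b : S) : S :=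
  exist _ (vadd (proj1_sig a) (proj1_sig b))
    (proj1 (proj2 HP) _ _ (proj2_sig a) (proj2_sig b)).
Definition sub_scal (r : R) (a : S) : S :=
  exist _ (vscal r (proj1_sig a)) (proj1 (proj2 (proj2 HP)) r _ (proj2_sig a)).
Definition sub_opp (a : S) : S := sub_scal (-1) a.
Definition sub_norm (a : S) : R := vnorm (proj1_sig a).

Definition subspace : NormedSpace.
Proof.
  refine (mkNS S sub_zero sub_add sub_opp sub_scal sub_norm _ _ _ _ _ _ _ _ _ _ _);
  unfold sub_norm, sub_opp; intros; try (apply sub_eq; simpl).
  - apply vadd_assoc.
  - apply vadd_comm.
  - apply vadd_0l.
  - rewrite <- vopp_scal. apply vadd_oppr.
  - apply vscal_addl.
  - apply vscal_addr.
  - apply vscal_assoc.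
  - apply vscal_1.
  - apply vnorm_triangle.
  - apply vnorm_scal.
  - apply vnorm_eq0 in H. exact H.
Defined.
End Sub.

(** * Quotients: Q together with q : Y -> Q is (isometrically) the quotient Y/Z *)
Definition is_quotient_map (Y : NormedSpace) (Z : Y -> Prop) (Q : NormedSpace)
  (q : Y -> Q) : Prop :=
  (forall x y, q (vadd x y) = vadd (q x) (q y)) /\
  (forall a x, q (vscal a x) = vscal a (q x)) /\
  (forall w : Q, exists y, q y = w) /\
  (forall y, q y = vzero <-> Z y) /\
  (* ||q y|| = inf { ||y + z|| : z in Z } *)
  (forall y z, Z z -> vnorm (q y) <= vnorm (vadd y z)) /\
  (forall y eps, eps > 0 -> exists z, Z z /\ vnorm (vadd y z) < vnorm (q y) + eps).

From Stdlib Require Import Reals ZArith Lra Lia Classical ClassicalEpsilon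
  FunctionalExtensionality List Cantor Rtopology.
Open Scope R_scope.

(** Everything rests on the
  one-sided estimate "eventually ||x^* + h_n|| <= ||x^* - h_n|| + eps" ([au_from_one_sided]):
  applied to (h_n) and (-h_n) it gives property (au^* ).

  (i) Let P_N be the N-th partial-sum projection of a shrinking 1-UFDD.  Then T = 2P_N - I has
  norm <= 1 (unconditionality), x^* - P_N^* x^* is small for large N (shrinking), and
  h_n o P_N -> 0 in norm since P_N has finite rank ([partial_sum_uniformly_null]).  Writing
  x^* + h_n = (x^* - h_n) o T + 2 (x^* - P_N^* x^* ) + 2 h_n o P_N gives the estimate.
  Separability of X follows from the FDD (rational combinations of spanning vectors).

  (ii) A quotient map identifies (Y/Z)^* isometrically with a subspace of Y^*, so (au^* )
  transfers directly.  For a closed subspace X of Y we argue by contradiction: extend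
  x^* - h_{n_k} to Y by Hahn-Banach (proved here for separable spaces), bound the extensions
  by the uniform boundedness principle, extract a weak^* convergent subsequence with limit u
  (which extends x^* ), and apply (au^* ) of Y to u and the weak^*-null sequence u - Phi_k. *)

(** [vring] proves equalities between expressions built from [vadd], [vsub], [vopp], [vscal]
  and [vzero], by reflecting both sides to formal linear combinations of the atoms and
  comparing coefficients with [ring]/[field]. *)

Inductive vexp := VAtom (n:nat) | VZero | VAdd (a b : vexp) | VSub (a b : vexp)
  | VOpp (a : vexp) | VScal (r:R) (a:vexp).

Fixpoint vden (X : NormedSpace) (env : list X) (e : vexp) : X :=
  match e with
  | VAtom n => nth n env vzero
  | VZero => vzero
  | VAdd a b => vadd (vden X env a) (vden X env b)
  | VSub a b => vsub (vden X env a) (vden X env b)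
  | VOpp a => vopp (vden X env a)
  | VScal r a => vscal r (vden X env a)
  end.

Fixpoint vcoef (e : vexp) (i : nat) : R :=
  match e with
  | VAtom n => if Nat.eqb n i then 1 else 0
  | VZero => 0
  | VAdd a b => vcoef a i + vcoef b i
  | VSub a b => vcoef a i - vcoef b i
  | VOpp a => - vcoef a i
  | VScal r a => r * vcoef a i
  end.

Lemma vadd_0r (X : NormedSpace) (x : X) : vadd x vzero = x.
Proof. rewrite vadd_comm. apply vadd_0l. Qed.

Lemma vscal_zero (X : NormedSpace) (r : R) : vscal r (@vzero X) = vzero.
Proof. rewrite <- (vscal_0 X vzero), vscal_assoc. f_equal; ring. Qed.

Lemma vsum_add (X : NormedSpace) (f g : nat -> X) n :
  vsum (fun i => vadd (f i) (g i)) n = vadd (vsum f n) (vsum g n).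
Proof.
  induction n; simpl. { now rewrite vadd_0l. }
  rewrite IHn, !vadd_assoc. f_equal.
  rewrite <- !vadd_assoc. f_equal. apply vadd_comm.
Qed.

Lemma vsum_scal (X : NormedSpace) (r : R) (f : nat -> X) n :
  vsum (fun i => vscal r (f i)) n = vscal r (vsum f n).
Proof. induction n; simpl. { now rewrite vscal_zero. } now rewrite IHn, vscal_addr. Qed.

Lemma vsum_ext (X : NormedSpace) (f g : nat -> X) n :
  (forall i, (i < n)%nat -> f i = g i) -> vsum f n = vsum g n.
Proof.
  induction n; simpl; intros H; auto.
  rewrite IHn by (intros; apply H; lia). now rewrite H by lia.
Qed.

Lemma vsum_zero (X : NormedSpace) n : vsum (fun _ => @vzero X) n = vzero.
Proof. induction n; simpl; auto. rewrite IHn. apply vadd_0l. Qed.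

Lemma vsum_delta (X : NormedSpace) (env : list X) k n :
  vsum (fun i => vscal (if Nat.eqb k i then 1 else 0) (nth i env vzero)) n =
  if Nat.ltb k n then nth k env vzero else vzero.
Proof.
  induction n; simpl; auto. rewrite IHn.
  destruct (Nat.eqb_spec k n) as [->|E].
  - rewrite vscal_1, (proj2 (Nat.ltb_ge n n)), (proj2 (Nat.ltb_lt n (S n))) by lia.
    apply vadd_0l.
  - rewrite vscal_0, vadd_0r.
    destruct (Nat.ltb_spec k n); [rewrite (proj2 (Nat.ltb_lt k (S n)))
                                 |rewrite (proj2 (Nat.ltb_ge k (S n)))]; auto; lia.
Qed.

Lemma vden_coef X env e :
  vden X env e = vsum (fun i => vscal (vcoef e i) (nth i env vzero)) (length env).
Proof.
  induction e; simpl.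
  - rewrite vsum_delta. destruct (Nat.ltb_spec n (length env)); auto.
    now apply nth_overflow.
  - rewrite <- (vsum_zero X (length env)). apply vsum_ext. intros. now rewrite vscal_0.
  - rewrite IHe1, IHe2, <- vsum_add. apply vsum_ext. intros. now rewrite vscal_addl.
  - unfold vsub. rewrite IHe1, IHe2, vopp_scal, <- vsum_scal, <- vsum_add.
    apply vsum_ext. intros. rewrite vscal_assoc, <- vscal_addl. f_equal. ring.
  - rewrite IHe, vopp_scal, <- vsum_scal. apply vsum_ext. intros.
    rewrite vscal_assoc. f_equal. ring.
  - rewrite IHe, <- vsum_scal. apply vsum_ext. intros. now rewrite vscal_assoc.
Qed.

Lemma vring_ok X env e1 e2 :
  (forall i, (i < length env)%nat -> vcoef e1 i = vcoef e2 i) -> vden X env e1 = vden X env e2.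
Proof. intros H. rewrite !vden_coef. apply vsum_ext. intros i Hi. now rewrite H. Qed.

Ltac vfind x l := lazymatch l with
  | cons x _ => constr:(O)
  | cons _ ?l' => let n := vfind x l' in constr:(S n)
  end.

Ltac vadd_atom x l := match l with
  | _ => let _ := vfind x l in l
  | _ => constr:(cons x l)
  end.

Ltac vcollect t l := lazymatch t with
  | @vadd _ ?a ?b => let l1 := vcollect a l in vcollect b l1
  | @vsub _ ?a ?b => let l1 := vcollect a l in vcollect b l1
  | @vopp _ ?a => vcollect a l
  | @vscal _ _ ?a => vcollect a l
  | @vzero _ => l
  | _ => vadd_atom t l
  end.

Ltac vreify t l := lazymatch t with
  | @vadd _ ?a ?b => let x := vreify a l in let y := vreify b l in constr:(VAdd x y)
  | @vsub _ ?a ?b => let x := vreify a l in let y := vreify b l in constr:(VSub x y)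
  | @vopp _ ?a => let x := vreify a l in constr:(VOpp x)
  | @vscal _ ?r ?a => let x := vreify a l in constr:(VScal r x)
  | @vzero _ => constr:(VZero)
  | _ => let n := vfind t l in constr:(VAtom n)
  end.

Ltac vring := lazymatch goal with
  | |- @eq _ ?L ?R =>
    let X := lazymatch type of L with V ?X => X end in
    let l0 := vcollect L (@nil (V X)) in
    let l := vcollect R l0 in
    let e1 := vreify L l in let e2 := vreify R l in
    change (vden X l e1 = vden X l e2); apply vring_ok;
    let i := fresh "i" in let Hi := fresh "Hi" in
    intros i Hi; simpl in Hi;
    repeat (first [exfalso; lia | destruct i as [|i]; [simpl; solve [ring | field; auto]|]])
  end.

Lemma vnorm_zero (X : NormedSpace) : vnorm (@vzero X) = 0.
Proof. rewrite <- (vscal_0 X vzero), vnorm_scal, Rabs_R0. ring. Qed.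

Lemma vnorm_opp (X : NormedSpace) (x : X) : vnorm (vopp x) = vnorm x.
Proof. rewrite vopp_scal, vnorm_scal, Rabs_left by lra. ring. Qed.

Lemma vnorm_nonneg (X : NormedSpace) (x : X) : 0 <= vnorm x.
Proof.
  pose proof (vnorm_triangle X x (vopp x)). rewrite vadd_oppr, vnorm_zero, vnorm_opp in H. lra.
Qed.

Lemma vnorm_sub_sym (X : NormedSpace) (x y : X) : vnorm (vsub x y) = vnorm (vsub y x).
Proof. rewrite <- vnorm_opp. f_equal. vring. Qed.

Lemma vnorm_sub_tri (X : NormedSpace) (x y z : X) :
  vnorm (vsub x z) <= vnorm (vsub x y) + vnorm (vsub y z).
Proof. replace (vsub x z) with (vadd (vsub x y) (vsub y z)) by vring. apply vnorm_triangle. Qed.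

Lemma vnorm_sub_le (X : NormedSpace) (x y : X) : vnorm (vsub x y) <= vnorm x + vnorm y.
Proof. unfold vsub. rewrite <- (vnorm_opp X y). apply vnorm_triangle. Qed.

Lemma vsub_eq0 (X : NormedSpace) (x y : X) : vnorm (vsub x y) <= 0 -> x = y.
Proof.
  intros H. pose proof (vnorm_nonneg X (vsub x y)).
  assert (E : vsub x y = vzero) by (apply vnorm_eq0; lra).
  replace x with (vadd (vsub x y) y) by vring. rewrite E. apply vadd_0l.
Qed.

Lemma vnorm_vsum (X : NormedSpace) (g : nat -> X) n :
  vnorm (vsum g n) <= rsum (fun i => vnorm (g i)) n.
Proof.
  induction n; simpl. { rewrite vnorm_zero; lra. }
  eapply Rle_trans. apply vnorm_triangle. lra.
Qed.

Lemma rsum_mult c f n : rsum (fun i => c * f i) n = c * rsum f n.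
Proof. induction n; simpl. lra. rewrite IHn. ring. Qed.

Lemma rsum_le f g n : (forall i, (i < n)%nat -> f i <= g i) -> rsum f n <= rsum g n.
Proof.
  induction n; simpl; intros H; [lra|].
  assert (rsum f n <= rsum g n) by (apply IHn; auto). specialize (H n ltac:(lia)). lra.
Qed.

Lemma rsum_nonneg f n : (forall i, (i < n)%nat -> 0 <= f i) -> 0 <= rsum f n.
Proof.
  intros H. induction n; simpl; [lra|].
  assert (0 <= rsum f n) by (apply IHn; auto). specialize (H n ltac:(lia)). lra.
Qed.

Lemma rsum_abs f n : Rabs (rsum f n) <= rsum (fun i => Rabs (f i)) n.
Proof.
  induction n; simpl. { rewrite Rabs_R0; lra. }
  eapply Rle_trans. apply Rabs_triang. lra.
Qed.

Lemma rsum_term_le f n i : (forall j, (j < n)%nat -> 0 <= f j) -> (i < n)%nat -> f i <= rsum f n.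
Proof.
  induction n; intros H Hi; [lia|]. simpl. destruct (Nat.eq_dec i n) as [->|E].
  - assert (0 <= rsum f n) by (apply rsum_nonneg; intros; apply H; lia). lra.
  - assert (f i <= rsum f n) by (apply IHn; [intros; apply H; lia | lia]).
    specialize (H n ltac:(lia)). lra.
Qed.

Lemma Rabs_triang4 a b c d : Rabs (a + b - c - d) <= Rabs a + Rabs b + Rabs c + Rabs d.
Proof.
  unfold Rminus. pose proof (Rabs_triang (a + b + - c) (- d)).
  pose proof (Rabs_triang (a + b) (- c)). pose proof (Rabs_triang a b). rewrite Rabs_Ropp in *. lra.
Qed.

Lemma cv_const c : Un_cv (fun _ => c) c.
Proof. intros e He. exists O. intros. rewrite R_dist_eq. auto. Qed.

Lemma rsum_cv (a : nat -> nat -> R) k : (forall j, (j < k)%nat -> Un_cv (fun n => a n j) 0) ->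
  Un_cv (fun n => rsum (a n) k) 0.
Proof.
  induction k; intros H; simpl. { apply cv_const. }
  replace 0 with (0 + 0) by ring. apply CV_plus.
  - apply IHk. intros; apply H; lia.
  - apply H; lia.
Qed.

Lemma cv_squeeze0 (a b : nat -> R) : Un_cv b 0 -> (forall n, Rabs (a n) <= b n) -> Un_cv a 0.
Proof.
  intros Hb H e He. destruct (Hb e He) as [N HN]. exists N. intros n Hn.
  specialize (HN n Hn). specialize (H n).
  unfold R_dist in *. rewrite Rminus_0_r in *. apply Rabs_def2 in HN. lra.
Qed.

Lemma cv_dist_tri (a b : nat -> R) l : Un_cv a l -> Un_cv (fun n => b n - a n) 0 -> Un_cv b l.
Proof.
  intros Ha Hb. replace l with (l + 0) by ring.
  replace b with (fun n => a n + (b n - a n)) by (apply functional_extensionality; intros; ring).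
  now apply CV_plus.
Qed.

Lemma le_cv_0 x (e : nat -> R) : Un_cv e 0 -> (forall n, x <= e n) -> x <= 0.
Proof. intros Hc Hx. exact (Rle_cv_lim (Un := fun _ => x) Hx (cv_const x) Hc). Qed.

Lemma cv_0_eventually_lt (e : nat -> R) : Un_cv e 0 ->
  forall eps, eps > 0 -> exists N, forall n, (N <= n)%nat -> e n < eps.
Proof.
  intros H eps He. destruct (H eps He) as [N HN]. exists N. intros n Hn. specialize (HN n Hn).
  unfold R_dist in HN. rewrite Rminus_0_r in HN. apply Rabs_def2 in HN. lra.
Qed.

Lemma le_eps a b c : 0 <= c -> (forall eta, eta > 0 -> a <= b + eta * c) -> a <= b.
Proof.
  intros Hc H. destruct (Rle_dec a b) as [|Hab]; auto. exfalso.
  set (eta := (a - b) / (2 * (c + 1))).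
  assert (Heta : eta > 0) by (unfold eta; apply Rdiv_lt_0_compat; lra).
  specialize (H eta Heta).
  assert (eta * (2 * (c + 1)) = a - b) by (unfold eta; field; lra).
  nra.
Qed.

Lemma inv_S_pos n : 0 < / INR (S n).
Proof. apply Rinv_0_lt_compat. apply lt_0_INR. lia. Qed.

Lemma cv_inv_S : Un_cv (fun n => / INR (S n)) 0.
Proof.
  intros e He. destruct (@RinvN_cv e He) as [N HN]. exists N. intros n Hn.
  rewrite S_INR. exact (HN n Hn).
Qed.

Lemma small_inv e : e > 0 -> exists N, forall n, (N <= n)%nat -> / INR (S n) < e.
Proof. intros He. exact (cv_0_eventually_lt _ cv_inv_S e He). Qed.

Lemma cv_bounded (s : nat -> R) l : Un_cv s l -> exists B, forall n, Rabs (s n) <= B.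
Proof.
  intros H. destruct (maj_by_pos s (exist _ l H)) as [B [_ HB]]. now exists B.
Qed.

Section Functionals.
Variable X : NormedSpace.

Lemma lf_add (f : X -> R) x y : linear_functional f -> f (vadd x y) = f x + f y.
Proof. intros H. apply (proj1 H). Qed.

Lemma lf_scal (f : X -> R) a x : linear_functional f -> f (vscal a x) = a * f x.
Proof. intros H. apply (proj2 H). Qed.

Lemma lf_zero (f : X -> R) : linear_functional f -> f vzero = 0.
Proof. intros H. rewrite <- (vscal_0 X vzero), lf_scal by auto. ring. Qed.

Lemma lf_sub (f : X -> R) x y : linear_functional f -> f (vsub x y) = f x - f y.
Proof. intros H. unfold vsub. rewrite lf_add, vopp_scal, lf_scal by auto. ring. Qed.

Lemma lf_vsum (f : X -> R) g n : linear_functional f ->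
  f (vsum g n) = rsum (fun i => f (g i)) n.
Proof. intros H. induction n; simpl. { now apply lf_zero. } now rewrite lf_add, IHn. Qed.

Definition dset (f : X -> R) := fun t => exists x : X, vnorm x <= 1 /\ t = Rabs (f x).

Lemma dnorm_lub (f : X -> R) : dual_elem f -> is_lub (dset f) (dnorm f).
Proof.
  intros [Hl [C HC]].
  assert (B : bound (dset f)).
  { exists (Rabs C). intros t [x [Hx ->]]. eapply Rle_trans. apply HC.
    pose proof (vnorm_nonneg X x). pose proof (Rle_abs C). pose proof (Rabs_pos C). nra. }
  assert (N : exists t, dset f t).
  { exists 0, vzero. rewrite vnorm_zero, lf_zero, Rabs_R0 by auto. split; auto; lra. }
  apply (epsilon_spec (inhabits 0) (is_lub (dset f))).
  destruct (completeness _ B N) as [m Hm]. now exists m.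
Qed.

Lemma dnorm_ge (f : X -> R) x : dual_elem f -> vnorm x <= 1 -> Rabs (f x) <= dnorm f.
Proof. intros H Hx. apply (proj1 (dnorm_lub f H)). now exists x. Qed.

Lemma dnorm_le (f : X -> R) M : dual_elem f ->
  (forall x, vnorm x <= 1 -> Rabs (f x) <= M) -> dnorm f <= M.
Proof. intros H HM. apply (proj2 (dnorm_lub f H)). intros t [x [Hx ->]]. auto. Qed.

Lemma dnorm_nonneg (f : X -> R) : dual_elem f -> 0 <= dnorm f.
Proof.
  intros H. eapply Rle_trans; [apply Rabs_pos|]. apply (dnorm_ge f vzero H).
  rewrite vnorm_zero; lra.
Qed.

Lemma dnorm_bound (f : X -> R) x : dual_elem f -> Rabs (f x) <= dnorm f * vnorm x.
Proof.
  intros H. pose proof (vnorm_nonneg X x) as Hx0.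
  destruct (Req_dec (vnorm x) 0) as [E|E].
  - apply vnorm_eq0 in E. subst. rewrite lf_zero, Rabs_R0, vnorm_zero by apply H. lra.
  - assert (Hi : 0 < / vnorm x) by (apply Rinv_0_lt_compat; lra).
    pose proof (dnorm_ge f (vscal (/ vnorm x) x) H) as Hn.
    rewrite vnorm_scal, lf_scal, Rabs_mult, Rabs_right in Hn by (apply H || lra).
    assert (Hx1 : / vnorm x * vnorm x = 1) by (field; auto).
    specialize (Hn ltac:(lra)).
    apply Rmult_le_compat_r with (r := vnorm x) in Hn; auto.
    replace (/ vnorm x * Rabs (f x) * vnorm x) with (Rabs (f x)) in Hn by (field; auto). auto.
Qed.

Lemma dnorm_le_C (f : X -> R) C : dual_elem f -> 0 <= C ->
  (forall x, Rabs (f x) <= C * vnorm x) -> dnorm f <= C.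
Proof. intros H HC Hb. apply dnorm_le; auto. intros x Hx. eapply Rle_trans. apply Hb. nra. Qed.

Lemma dnorm_ext (f g : X -> R) : (forall x, f x = g x) -> dnorm f = dnorm g.
Proof. intros H. apply functional_extensionality in H. now subst. Qed.

Lemma dual_zero : dual_elem (fun _ : X => 0).
Proof. split. { split; intros; ring. } exists 0. intros. rewrite Rabs_R0. lra. Qed.

Lemma dual_add (f g : X -> R) : dual_elem f -> dual_elem g -> dual_elem (fun x => f x + g x).
Proof.
  intros [[Hf1 Hf2] [C HC]] [[Hg1 Hg2] [D HD]]. split; [split|].
  - intros. rewrite Hf1, Hg1. ring.
  - intros. rewrite Hf2, Hg2. ring.
  - exists (C + D). intros. eapply Rle_trans. apply Rabs_triang.
    specialize (HC x). specialize (HD x). lra.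
Qed.

Lemma dual_scal (f : X -> R) a : dual_elem f -> dual_elem (fun x => a * f x).
Proof.
  intros [[Hf1 Hf2] [C HC]]. split; [split|].
  - intros. rewrite Hf1. ring.
  - intros. rewrite Hf2. ring.
  - exists (Rabs a * C). intros. rewrite Rabs_mult, Rmult_assoc.
    apply Rmult_le_compat_l; auto. apply Rabs_pos.
Qed.

Lemma dual_sub (f g : X -> R) : dual_elem f -> dual_elem g -> dual_elem (fun x => f x - g x).
Proof.
  intros Hf Hg. replace (fun x => f x - g x) with (fun x => f x + -1 * g x).
  - apply dual_add, dual_scal; auto.
  - apply functional_extensionality. intros; ring.
Qed.

Lemma dual_rsum (F : nat -> X -> R) N :
  (forall j, dual_elem (F j)) -> dual_elem (fun x => rsum (fun j => F j x) N).
Proof. intros H. induction N; simpl. { apply dual_zero. } now apply dual_add. Qed.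

Lemma dual_comp (f : X -> R) (T : X -> X) :
  dual_elem f -> linear_op T -> bounded_op T -> dual_elem (fun x => f (T x)).
Proof.
  intros Hf [HT1 HT2] [C HC]. split; [split|].
  - intros. rewrite HT1. apply lf_add, Hf.
  - intros. rewrite HT2. apply lf_scal, Hf.
  - exists (dnorm f * C). intros x. eapply Rle_trans. apply dnorm_bound; auto.
    rewrite Rmult_assoc. apply Rmult_le_compat_l; auto. now apply dnorm_nonneg.
Qed.

Definition weak_star_null (h : nat -> X -> R) :=
  (forall n, dual_elem (h n)) /\ (forall x, Un_cv (fun n => h n x) 0).

Definition one_sided_au : Prop :=
  forall (xs : X -> R) (h : nat -> X -> R), dual_elem xs -> weak_star_null h ->
  forall eps, eps > 0 -> exists M, forall n, (M <= n)%nat ->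
    dnorm (fun x => xs x + h n x) <= dnorm (fun x => xs x - h n x) + eps.

(** applying the one-sided estimate to (h_n) and (-h_n) gives the two-sided limit *)
Lemma au_from_one_sided : separable X -> one_sided_au -> has_au_star X.
Proof.
  intros Hsep K. split; auto. intros xs xn Hxs Hd Hw eps Heps.
  assert (W2 : weak_star_null (fun n x => - xn n x)).
  { split.
    - intros n. replace (fun x => - xn n x) with (fun x => -1 * xn n x); [now apply dual_scal|].
      apply functional_extensionality; intros; ring.
    - intros x. replace 0 with (- 0) by ring. now apply CV_opp. }
  destruct (K xs xn Hxs (conj Hd Hw) (eps / 2) ltac:(lra)) as [M1 H1].
  destruct (K xs _ Hxs W2 (eps / 2) ltac:(lra)) as [M2 H2].
  exists (Nat.max M1 M2). intros n Hn.
  specialize (H1 n ltac:(lia)). specialize (H2 n ltac:(lia)).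
  rewrite (dnorm_ext (fun x => xs x + - xn n x) (fun x => xs x - xn n x)) in H2 by (intros; ring).
  rewrite (dnorm_ext (fun x => xs x - - xn n x) (fun x => xs x + xn n x)) in H2 by (intros; ring).
  unfold R_dist. rewrite Rminus_0_r. apply Rabs_def1; lra.
Qed.

End Functionals.

Arguments weak_star_null {X} h.

(** The family is [C]-independent when the l^1 norm of the coefficients is at most
  [C] times the norm of the combination; such families make finite-rank operators
  controllable coordinatewise. *)

Section FiniteFamilies.
Variable X : NormedSpace.

Definition lc (u : nat -> X) (d : nat -> R) k := vsum (fun j => vscal (d j) (u j)) k.
Definition l1 (d : nat -> R) k := rsum (fun j => Rabs (d j)) k.

Definition c_independent (C : R) (u : nat -> X) (k : nat) : Prop :=
  forall d, l1 d k <= C * vnorm (lc u d k).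

Lemma lc_add (u : nat -> X) d e k : lc u (fun j => d j + e j) k = vadd (lc u d k) (lc u e k).
Proof. unfold lc. rewrite <- vsum_add. apply vsum_ext. intros. apply vscal_addl. Qed.

Lemma lc_scal (u : nat -> X) a d k : lc u (fun j => a * d j) k = vscal a (lc u d k).
Proof. unfold lc. rewrite <- vsum_scal. apply vsum_ext. intros. now rewrite vscal_assoc. Qed.

Lemma lc_sub (u : nat -> X) d e k : lc u (fun j => d j - e j) k = vsub (lc u d k) (lc u e k).
Proof.
  replace (fun j => d j - e j) with (fun j => d j + (-1) * e j)
    by (apply functional_extensionality; intros; ring).
  rewrite lc_add, lc_scal. vring.
Qed.

Lemma vnorm_lc (u : nat -> X) d k :
  vnorm (lc u d k) <= rsum (fun j => Rabs (d j) * vnorm (u j)) k.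
Proof.
  unfold lc. eapply Rle_trans. apply vnorm_vsum. apply rsum_le. intros. rewrite vnorm_scal. lra.
Qed.

Lemma lc_ext (u u' : nat -> X) d d' k :
  (forall j, (j < k)%nat -> d j = d' j /\ u j = u' j) -> lc u d k = lc u' d' k.
Proof. intros H. apply vsum_ext. intros j Hj. destruct (H j Hj) as [-> ->]. auto. Qed.

Section Independent.
Variables (C : R) (u : nat -> X) (k : nat).
Hypotheses (HC0 : 0 <= C) (HC : c_independent C u k).

Lemma coef_cauchy (w : X) (D : nat -> nat -> R) :
  (forall n, vnorm (vsub w (lc u (D n) k)) < / INR (S n)) ->
  forall j, (j < k)%nat -> Cauchy_crit (fun n => D n j).
Proof.
  intros HD j Hj e He.
  destruct (small_inv (e / (2 * C + 1))) as [N HN]. { apply Rdiv_lt_0_compat; lra. }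
  exists N. intros n p Hn Hp. unfold R_dist.
  assert (H1 : Rabs (D n j - D p j) <= l1 (fun i => D n i - D p i) k).
  { apply (rsum_term_le (fun i => Rabs (D n i - D p i))); auto. intros; apply Rabs_pos. }
  pose proof (HC (fun i => D n i - D p i)) as H2. rewrite lc_sub in H2.
  pose proof (vnorm_sub_tri X (lc u (D n) k) w (lc u (D p) k)) as H3.
  rewrite (vnorm_sub_sym X _ w) in H3.
  pose proof (HD n). pose proof (HD p). pose proof (HN n Hn). pose proof (HN p Hp).
  assert (E : (2 * C + 1) * (e / (2 * C + 1)) = e) by (field; lra).
  nra.
Qed.

(** the span of a [C]-independent family is closed *)
Lemma span_closed (w : X) (D : nat -> nat -> R) :
  (forall n, vnorm (vsub w (lc u (D n) k)) < / INR (S n)) -> exists L, w = lc u L k.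
Proof.
  intros HD.
  assert (HL : forall j, exists l, (j < k)%nat -> Un_cv (fun n => D n j) l).
  { intros j. destruct (le_lt_dec k j) as [Hkj|Hkj]; [exists 0; lia|].
    destruct (R_complete _ (coef_cauchy w D HD j Hkj)) as [l Hl]. now exists l. }
  apply choice in HL. destruct HL as [L HL]. exists L. apply vsub_eq0.
  apply (le_cv_0 _ (fun n => vnorm (vsub w (lc u (D n) k))
                             + rsum (fun j => Rabs (D n j - L j) * vnorm (u j)) k)).
  - replace 0 with (0 + 0) by ring. apply CV_plus.
    + apply (cv_squeeze0 _ _ cv_inv_S). intros n.
      rewrite Rabs_right by (apply Rle_ge, vnorm_nonneg). left; apply HD.
    + apply rsum_cv. intros j Hj. replace 0 with (0 * vnorm (u j)) by ring.
      apply (CV_mult _ (fun _ => vnorm (u j))); [|apply cv_const].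
      intros ep Hep. destruct (HL j Hj ep Hep) as [N HN]. exists N. intros n Hn.
      specialize (HN n Hn). unfold R_dist in *. now rewrite Rminus_0_r, Rabs_Rabsolu.
  - intros n. eapply Rle_trans. apply (vnorm_sub_tri X w (lc u (D n) k)).
    apply Rplus_le_compat_l. rewrite <- lc_sub. apply vnorm_lc.
Qed.

Lemma dist_to_span_pos (w : X) : (forall d, w <> lc u d k) ->
  exists del, del > 0 /\ forall d, del <= vnorm (vsub w (lc u d k)).
Proof.
  intros Hw. apply NNPP. intros Hno.
  assert (Hs : forall n : nat, exists d, vnorm (vsub w (lc u d k)) < / INR (S n)).
  { intros n. apply NNPP. intros Hn. apply Hno. exists (/ INR (S n)). split; [apply inv_S_pos|].
    intros d. apply Rnot_lt_le. intros Hl. apply Hn. now exists d. }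
  apply choice in Hs. destruct Hs as [D HD].
  destruct (span_closed w D HD) as [L HL]. exact (Hw L HL).
Qed.

Lemma c_independent_extend (w : X) (del : R) : del > 0 ->
  (forall d, del <= vnorm (vsub w (lc u d k))) ->
  c_independent (/ del + C * (1 + vnorm w / del)) (fun j => if Nat.ltb j k then u j else w) (S k).
Proof.
  intros Hdel0 Hdel d. set (u' := fun j => if Nat.ltb j k then u j else w).
  assert (Hu' : lc u' d (S k) = vadd (lc u d k) (vscal (d k) w)).
  { unfold lc at 1. simpl. unfold u' at 2. rewrite (proj2 (Nat.ltb_ge k k)) by lia.
    f_equal. apply lc_ext. intros j Hj. unfold u'. now rewrite (proj2 (Nat.ltb_lt j k)). }
  rewrite Hu'. set (z := vadd (lc u d k) (vscal (d k) w)).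
  pose proof (vnorm_nonneg X z). pose proof (vnorm_nonneg X w).
  assert (Hi : 0 < / del) by (apply Rinv_0_lt_compat; lra).
  assert (Hdk : Rabs (d k) * del <= vnorm z).
  { destruct (Req_dec (d k) 0) as [E|E]. { rewrite E, Rabs_R0. lra. }
    specialize (Hdel (fun j => - / d k * d j)).
    replace z with (vscal (d k) (vsub w (lc u (fun j => - / d k * d j) k))).
    - rewrite vnorm_scal. pose proof (Rabs_pos (d k)). nra.
    - rewrite lc_scal. unfold z. vring. }
  assert (Hl : vnorm (lc u d k) <= vnorm z + Rabs (d k) * vnorm w).
  { replace (lc u d k) with (vsub z (vscal (d k) w)) by (unfold z; vring).
    eapply Rle_trans. apply vnorm_sub_le. rewrite vnorm_scal. lra. }
  unfold l1. simpl. fold (l1 d k). specialize (HC d).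
  assert (Hdk' : Rabs (d k) <= / del * vnorm z).
  { apply (Rmult_le_reg_r del); auto. rewrite Rmult_assoc, (Rmult_comm (vnorm z)), <- Rmult_assoc,
      Rinv_l by lra. lra. }
  assert (vnorm w / del = vnorm w * / del) by reflexivity.
  assert (Rabs (d k) * vnorm w <= vnorm z * (vnorm w / del)) by nra.
  nra.
Qed.

End Independent.

Lemma independent_basis (v : nat -> X) m : exists k (u : nat -> X) C, 0 <= C /\
  c_independent C u k /\ (forall c, exists d, lc v c m = lc u d k).
Proof.
  induction m.
  - exists O, v, 0. split; [lra|]. split; [intros d; unfold l1; simpl; lra|].
    intros c. now exists c.
  - destruct IHm as [k [u [C [HC0 [HC Hrep]]]]].
    destruct (classic (exists d0, v m = lc u d0 k)) as [[d0 Hd0]|Hn].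
    + exists k, u, C. do 2 (split; auto). intros c. destruct (Hrep c) as [d Hd].
      exists (fun j => d j + c m * d0 j). rewrite lc_add, lc_scal, <- Hd0, <- Hd. reflexivity.
    + destruct (dist_to_span_pos C u k HC0 HC (v m)) as [del [Hdel0 Hdel]].
      { intros d E. apply Hn. now exists d. }
      eexists (S k), _, _. split; [|split; [apply (c_independent_extend C u k HC0 HC (v m) del);
                                             auto|]].
      { pose proof (vnorm_nonneg X (v m)).
        assert (0 < / del) by (apply Rinv_0_lt_compat; lra).
        assert (0 <= vnorm (v m) / del) by (unfold Rdiv; nra). nra. }
      intros c. destruct (Hrep c) as [d Hd]. exists (fun j => if Nat.ltb j k then d j else c m).
      unfold lc at 2. simpl. rewrite (proj2 (Nat.ltb_ge k k)) by lia.
      unfold lc at 1. simpl. fold (lc v c m). rewrite Hd. f_equal.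
      apply lc_ext. intros j Hj. now rewrite (proj2 (Nat.ltb_lt j k)).
Qed.

End FiniteFamilies.

Arguments lc {X} u d k.
(** ** Part (i): spaces with a shrinking 1-unconditional FDD *)

Section FDD.
Variable X : NormedSpace.

(** h_n o T -> 0 uniformly on the unit ball when T is bounded of finite rank: T factors
   through a [C]-independent finite family, on which h_n -> 0 coordinatewise *)
Lemma finite_rank_uniformly_null (T : X -> X) (h : nat -> X -> R) :
  bounded_op T -> finite_rank T -> weak_star_null h ->
  exists e, Un_cv e 0 /\ forall n y, Rabs (h n (T y)) <= e n * vnorm y.
Proof.
  intros [CT HCT] [m [v Hv]] [Hdu Hw].
  destruct (independent_basis X v m) as [k [u [C [HC0 [HC Hrep]]]]].
  set (s := fun n => rsum (fun j => Rabs (h n (u j))) k).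
  exists (fun n => C * CT * s n). split.
  - replace 0 with (C * CT * 0) by ring. apply (CV_mult (fun _ => C * CT)); [apply cv_const|].
    apply rsum_cv. intros j Hj. pose proof (cv_cvabs _ _ (Hw (u j))) as H.
    now rewrite Rabs_R0 in H.
  - intros n y. destruct (Hv y) as [c Hc]. destruct (Hrep c) as [d Hd].
    change (T y = lc v c m) in Hc. rewrite Hd in Hc.
    assert (Hs0 : 0 <= s n) by (apply rsum_nonneg; intros; apply Rabs_pos).
    assert (Hhd : Rabs (h n (T y)) <= l1 d k * s n).
    { rewrite Hc. unfold lc. rewrite lf_vsum by apply (Hdu n). eapply Rle_trans. apply rsum_abs.
      unfold l1. rewrite Rmult_comm, <- rsum_mult. apply rsum_le. intros i Hi.
      rewrite lf_scal, Rabs_mult, (Rmult_comm (s n)) by apply (Hdu n). apply Rmult_le_compat_l.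
      { apply Rabs_pos. }
      apply (rsum_term_le (fun j => Rabs (h n (u j)))); auto. intros; apply Rabs_pos. }
    specialize (HC d). specialize (HCT y). rewrite Hc in HCT.
    assert (l1 d k <= C * CT * vnorm y) by nra. nra.
Qed.

Section Decomposition.
Variable Q : nat -> X -> X.

Definition psum (N : nat) (y : X) : X := vsum (fun j => Q j y) N.

(** P_N has finite rank, so h_n o P_N -> 0 uniformly on the unit ball *)
Lemma partial_sum_uniformly_null (h : nat -> X -> R) : is_FDD X Q -> weak_star_null h ->
  forall N, exists e, Un_cv e 0 /\ forall n y, Rabs (h n (psum N y)) <= e n * vnorm y.
Proof.
  intros [HQ _] Hh N. induction N.
  - exists (fun _ => 0). split; [apply cv_const|].
    intros n y. unfold psum; simpl. rewrite lf_zero, Rabs_R0 by apply (proj1 Hh n). lra.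
  - destruct IHN as [e [He Hb]]. destruct (HQ N) as [_ [Hbd Hfr]].
    destruct (finite_rank_uniformly_null (Q N) h Hbd Hfr Hh) as [e' [He' Hb']].
    exists (fun n => e n + e' n). split.
    + replace 0 with (0 + 0) by ring. now apply CV_plus.
    + intros n y. unfold psum; simpl. rewrite lf_add by apply (proj1 Hh n).
      eapply Rle_trans. apply Rabs_triang. specialize (Hb n y). specialize (Hb' n y). unfold psum in Hb. lra.
Qed.

Lemma signed_partial_sum (g : nat -> X) N n :
  vadd (vsum (fun j => vscal (if Nat.ltb j N then 1 else -1) (g j)) n) (vsum g n)
  = vscal 2 (vsum g (Nat.min n N)).
Proof.
  induction n; cbn [vsum]. { rewrite vscal_zero. apply vadd_0l. }
  set (En := vsum (fun j => vscal (if j <? N then 1 else -1) (g j)) n) in *.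
  destruct (Nat.ltb_spec n N) as [Hn|Hn].
  - replace (Nat.min (S n) N) with (S n) by lia. replace (Nat.min n N) with n in IHn by lia.
    change (vsum g (S n)) with (vadd (vsum g n) (g n)).
    replace En with (vsub (vscal 2 (vsum g n)) (vsum g n)) by (rewrite <- IHn; vring).
    vring.
  - replace (Nat.min (S n) N) with (Nat.min n N) by lia. rewrite <- IHn. vring.
Qed.

Lemma reflection_contraction N y : is_1UFDD X Q -> vnorm (vsub (vscal 2 (psum N y)) y) <= vnorm y.
Proof.
  intros [[_ [_ [_ Hconv]]] Hunc].
  set (E := fun n => vsum (fun j => vscal (if Nat.ltb j N then 1 else -1) (Q j y)) n).
  assert (HT : forall n, (N <= n)%nat ->
            vsub (vscal 2 (psum N y)) y = vadd (E n) (vsub (psum n y) y)).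
  { intros n Hn. unfold psum. rewrite <- (Nat.min_r n N) by lia.
    rewrite <- (signed_partial_sum (fun j => Q j y)). unfold E. vring. }
  enough (vnorm (vsub (vscal 2 (psum N y)) y) - vnorm y <= 0) by lra.
  apply (le_cv_0 _ (fun n => vnorm (vsub (psum (n + N) y) y))).
  - intros ep Hep. destruct (Hconv y ep Hep) as [M HM]. exists M. intros n Hn. unfold R_dist.
    rewrite Rminus_0_r, Rabs_right by (apply Rle_ge, vnorm_nonneg). apply HM. lia.
  - intros n. rewrite (HT (n + N)%nat) by lia.
    pose proof (Hunc y (n + N)%nat (fun j => Nat.ltb j N)).
    pose proof (vnorm_triangle X (E (n + N)%nat) (vsub (psum (n + N) y) y)). unfold E in *. lra.
Qed.

(** the one-sided estimate: with T = 2 P_N - I and g = x^* - x^* o P_N,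
   x^* + h_n = (x^* - h_n) o T + 2 g + 2 h_n o P_N *)
Lemma shrinking_1UFDD_one_sided : is_1UFDD X Q -> shrinking_FDD X Q -> one_sided_au X.
Proof.
  intros HU HS xs h Hxs Hh eps Heps.
  destruct (cv_0_eventually_lt _ (HS xs Hxs) (eps / 4) ltac:(lra)) as [N HN].
  specialize (HN N (le_n N)).
  set (g := fun x => xs x - rsum (fun j => xs (Q j x)) N) in HN.
  assert (Hg : dual_elem g).
  { apply dual_sub; auto. apply dual_rsum. intros j.
    destruct HU as [[HQ _] _]. destruct (HQ j) as [Hl [Hb _]]. now apply dual_comp. }
  destruct (partial_sum_uniformly_null h (proj1 HU) Hh N) as [e [He Hb]].
  destruct (cv_0_eventually_lt _ He (eps / 4) ltac:(lra)) as [M HM].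
  exists M. intros n Hn.
  assert (Hd1 : dual_elem (fun x => xs x + h n x)) by (apply dual_add; auto; apply (proj1 Hh)).
  assert (Hd2 : dual_elem (fun x => xs x - h n x)) by (apply dual_sub; auto; apply (proj1 Hh)).
  pose proof (dnorm_nonneg X _ Hd2).
  apply dnorm_le_C; auto; [lra|]. intros y.
  set (Ty := vsub (vscal 2 (psum N y)) y).
  assert (Hl : linear_functional xs) by apply Hxs.
  assert (Hln : linear_functional (h n)) by apply (proj1 Hh n).
  assert (Eq : xs y + h n y = (xs Ty - h n Ty) + 2 * g y + 2 * h n (psum N y)).
  { unfold Ty, g, psum. rewrite !lf_sub, !lf_scal, (lf_vsum X xs) by auto. ring. }
  rewrite Eq.
  pose proof (dnorm_bound X _ Ty Hd2) as B1. cbv beta in B1.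
  pose proof (dnorm_bound X g y Hg) as B2. pose proof (Hb n y) as B3. pose proof (HM n Hn).
  assert (HT : vnorm Ty <= vnorm y) by apply (reflection_contraction N y HU).
  pose proof (vnorm_nonneg X y).
  assert (Rabs (g y) <= eps / 4 * vnorm y) by nra.
  assert (Rabs (h n (psum N y)) <= eps / 4 * vnorm y) by nra.
  assert (dnorm (fun x => xs x - h n x) * vnorm Ty <= dnorm (fun x => xs x - h n x) * vnorm y)
    by (apply Rmult_le_compat_l; lra).
  pose proof (Rabs_triang (xs Ty - h n Ty + 2 * g y) (2 * h n (psum N y))) as T1.
  pose proof (Rabs_triang (xs Ty - h n Ty) (2 * g y)) as T2.
  rewrite !Rabs_mult, (Rabs_right 2) in T1, T2 by lra. nra.
Qed.

End Decomposition.
End FDD.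
(** [ratn] enumerates the rationals; [lev w L] enumerates the combinations of [L] vectors of
  [w] with rational coefficients, and [rat_comb w] enumerates all of them. *)

Definition ratn (n : nat) : R :=
  let (a, r) := Cantor.of_nat n in let (b, c) := Cantor.of_nat r in (INR a - INR b) / INR (S c).

Lemma ratn_dense x del : del > 0 -> exists n, Rabs (ratn n - x) < del.
Proof.
  intros Hd. destruct (small_inv del Hd) as [c Hc]. specialize (Hc c (le_n c)).
  set (D := INR (S c)). assert (HD : 0 < D) by (apply lt_0_INR; lia).
  set (z := up (x * D)). destruct (archimed (x * D)) as [H1 H2]. fold z in H1, H2.
  exists (Cantor.to_nat (Z.to_nat z, Cantor.to_nat (Z.to_nat (- z), c))).
  unfold ratn. rewrite !Cantor.cancel_of_to.
  assert (E : INR (Z.to_nat z) - INR (Z.to_nat (- z)) = IZR z).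
  { rewrite !INR_IZR_INZ. destruct (Z_le_gt_dec 0 z).
    - rewrite Z2Nat.id by lia. replace (Z.to_nat (- z)) with O by lia. simpl. lra.
    - replace (Z.to_nat z) with O by lia. rewrite Z2Nat.id by lia. rewrite opp_IZR. simpl. lra. }
  rewrite E. fold D.
  assert (Ez : IZR z / D - x = (IZR z - x * D) * / D) by (field; lra).
  assert (0 < / D) by (apply Rinv_0_lt_compat; lra).
  assert (0 < IZR z / D - x <= / D) by (rewrite Ez; split; nra).
  rewrite Rabs_right by lra. fold D in Hc. lra.
Qed.

Section RationalSpan.
Variables (X : NormedSpace) (w : nat -> X).

Fixpoint lev (L : nat) : nat -> X :=
  match L with
  | O => fun _ => vzero
  | S L => fun n => let (a, b) := Cantor.of_nat n in let (k, z) := Cantor.of_nat b in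
                    vadd (lev L a) (vscal (ratn z) (w k))
  end.

Definition rat_comb (n : nat) : X := let (L, m) := Cantor.of_nat n in lev L m.

Definition approximable (x : X) :=
  forall eps, eps > 0 -> exists n, vnorm (vsub x (rat_comb n)) < eps.

Lemma approximable_zero : approximable vzero.
Proof.
  intros eps He. exists (Cantor.to_nat (O, O)). unfold rat_comb. rewrite Cantor.cancel_of_to.
  simpl. replace (vsub vzero vzero) with (@vzero X) by vring. rewrite vnorm_zero. lra.
Qed.

Lemma approximable_step x c k : approximable x -> approximable (vadd x (vscal c (w k))).
Proof.
  intros H eps He. destruct (H (eps / 2) ltac:(lra)) as [n0 Hn0].
  pose proof (vnorm_nonneg X (w k)) as Hw.
  destruct (ratn_dense c (eps / 2 / (vnorm (w k) + 1))) as [z Hz].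
  { apply Rdiv_lt_0_compat; lra. }
  destruct (Cantor.of_nat n0) as [L m] eqn:E.
  exists (Cantor.to_nat (S L, Cantor.to_nat (m, Cantor.to_nat (k, z)))).
  unfold rat_comb at 1. rewrite Cantor.cancel_of_to. cbn [lev]. rewrite !Cantor.cancel_of_to.
  unfold rat_comb in Hn0. rewrite E in Hn0.
  replace (vsub (vadd x (vscal c (w k))) (vadd (lev L m) (vscal (ratn z) (w k))))
    with (vadd (vsub x (lev L m)) (vscal (c - ratn z) (w k))) by vring.
  eapply Rle_lt_trans. apply vnorm_triangle. rewrite vnorm_scal, Rabs_minus_sym.
  assert (Ee : eps / 2 / (vnorm (w k) + 1) * (vnorm (w k) + 1) = eps / 2) by (field; lra).
  assert (Rabs (ratn z - c) * vnorm (w k) <= eps / 2 / (vnorm (w k) + 1) * vnorm (w k)).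
  { apply Rmult_le_compat_r; lra. }
  assert (0 < eps / 2 / (vnorm (w k) + 1)) by (apply Rdiv_lt_0_compat; lra).
  nra.
Qed.

Lemma separable_of_approximable :
  (forall x eps, eps > 0 -> exists a, approximable a /\ vnorm (vsub x a) < eps) -> separable X.
Proof.
  intros H. exists rat_comb. intros x eps He.
  destruct (H x (eps / 2) ltac:(lra)) as [a [Ha Hxa]].
  destruct (Ha (eps / 2) ltac:(lra)) as [n Hn]. exists n.
  eapply Rle_lt_trans. apply (vnorm_sub_tri X x a). lra.
Qed.

End RationalSpan.

(** a space with an FDD is separable: the partial sums of its elements are finite
   combinations of the countably many spanning vectors of the ranges of the Q_j *)
Lemma FDD_separable (X : NormedSpace) (Q : nat -> X -> X) : is_FDD X Q -> separable X.
Proof.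
  intros [HQ [_ [_ Hconv]]].
  assert (Hc : forall j, exists (mv : nat * (nat -> X)), forall x, exists c : nat -> R,
     Q j x = vsum (fun i => vscal (c i) (snd mv i)) (fst mv)).
  { intros j. destruct (HQ j) as [_ [_ [m [v Hv]]]]. now exists (m, v). }
  apply choice in Hc. destruct Hc as [mv Hmv].
  set (w := fun k => let (j, i) := Cantor.of_nat k in snd (mv j) i).
  assert (Hlc : forall j x c m, approximable X w x ->
            approximable X w (vadd x (vsum (fun i => vscal (c i) (snd (mv j) i)) m))).
  { intros j x c m Hx. induction m; simpl. { now rewrite vadd_0r. }
    replace (snd (mv j) m) with (w (Cantor.to_nat (j, m)))
      by (unfold w; now rewrite Cantor.cancel_of_to).
    rewrite vadd_assoc. now apply approximable_step. }
  assert (HP : forall y N, approximable X w (psum X Q N y)).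
  { intros y N. induction N. { apply approximable_zero. }
    unfold psum; simpl. destruct (Hmv N y) as [c ->]. now apply Hlc. }
  apply (separable_of_approximable X w). intros x eps He.
  destruct (Hconv x eps He) as [N HN]. exists (psum X Q N x). split; auto.
  rewrite vnorm_sub_sym. apply HN. lia.
Qed.
(** ** Part (ii): quotients

  Composing with the quotient map q identifies (Y/Z)^* isometrically with functionals on Y
  vanishing on Z; weak^*-null sequences stay weak^*-null, so (au^* ) passes to Y/Z. *)

Section Quotient.
Variables (Y : NormedSpace) (Z : Y -> Prop) (Q : NormedSpace) (q : Y -> Q).
Hypothesis Hq : is_quotient_map Y Z Q q.

Lemma quotient_sub x y : q (vsub x y) = vsub (q x) (q y).
Proof. destruct Hq as [Ha [Hs _]]. unfold vsub. rewrite Ha, !vopp_scal, Hs. auto. Qed.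

Lemma quotient_norm_le y : vnorm (q y) <= vnorm y.
Proof.
  destruct Hq as [_ [Hs [_ [Hk [Hn _]]]]].
  assert (Z vzero) by (apply Hk; rewrite <- (vscal_0 Y vzero), Hs; apply vscal_0).
  specialize (Hn y vzero H). now rewrite vadd_0r in Hn.
Qed.

Lemma quotient_dual (f : Q -> R) : dual_elem f -> dual_elem (fun y => f (q y)).
Proof.
  intros Hf. destruct Hq as [Ha [Hs _]]. split; [split|].
  - intros. rewrite Ha. apply lf_add, Hf.
  - intros. rewrite Hs. apply lf_scal, Hf.
  - exists (dnorm f). intros y. eapply Rle_trans. apply dnorm_bound; auto.
    apply Rmult_le_compat_l. now apply dnorm_nonneg. apply quotient_norm_le.
Qed.

(** f o q has the same norm as f: every w in Y/Z lifts to y with ||y|| <= ||w|| + eta *)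
Lemma quotient_dnorm (f : Q -> R) : dual_elem f -> dnorm (fun y => f (q y)) = dnorm f.
Proof.
  intros Hf. pose proof (quotient_dual f Hf) as Hfq. pose proof (dnorm_nonneg Y _ Hfq).
  apply Rle_antisym.
  - apply dnorm_le_C; auto. { now apply dnorm_nonneg. }
    intros y. eapply Rle_trans. apply dnorm_bound; auto.
    apply Rmult_le_compat_l. now apply dnorm_nonneg. apply quotient_norm_le.
  - apply dnorm_le; auto. intros w Hw.
    apply (le_eps _ _ (dnorm (fun y => f (q y)))); auto.
    intros eta Heta. destruct Hq as [Ha [_ [Hsurj [Hk [_ Hinf]]]]].
    destruct (Hsurj w) as [y0 <-]. destruct (Hinf y0 eta Heta) as [z [Hz Hyz]].
    assert (E : q (vadd y0 z) = q y0) by (rewrite Ha, (proj2 (Hk z) Hz); apply vadd_0r).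
    rewrite <- E. eapply Rle_trans. apply (dnorm_bound Y _ (vadd y0 z) Hfq). nra.
Qed.

Lemma quotient_separable : separable Y -> separable Q.
Proof.
  intros [d Hd]. exists (fun n => q (d n)). intros w eps He. destruct Hq as [_ [_ [Hsurj _]]].
  destruct (Hsurj w) as [y <-]. destruct (Hd y eps He) as [n Hn]. exists n.
  rewrite <- quotient_sub. eapply Rle_lt_trans. apply quotient_norm_le. auto.
Qed.

Lemma quotient_au_star : has_au_star Y -> has_au_star Q.
Proof.
  intros [Hs Hau]. split; [now apply quotient_separable|].
  intros xs xn Hxs Hxn Hw.
  pose proof (Hau (fun y => xs (q y)) (fun n y => xn n (q y)) (quotient_dual xs Hxs)
    (fun n => quotient_dual (xn n) (Hxn n)) (fun y => Hw (q y))) as H. cbv beta in H.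
  intros eps He. destruct (H eps He) as [N HN]. exists N. intros n Hn.
  rewrite <- (quotient_dnorm (fun x => xs x + xn n x)), <- (quotient_dnorm (fun x => xs x - xn n x)).
  - now apply HN.
  - now apply dual_sub.
  - now apply dual_add.
Qed.

End Quotient.
(** ** The Hahn-Banach extension theorem for separable spaces

  A functional dominated by c ||.|| on a subspace extends one dimension at a time
  (choosing the value at the new vector between a supremum and an infimum); iterating
  along a dense sequence extends it to a subspace containing that sequence, and uniform
  continuity extends it to the whole space. *)

Section HahnBanach.
Variable Y : NormedSpace.

Definition subsp (S : Y -> Prop) :=
  S vzero /\ (forall x y, S x -> S y -> S (vadd x y)) /\ (forall a x, S x -> S (vscal a x)).

Definition dominated (c : R) (S : Y -> Prop) (psi : Y -> R) :=
  subsp S /\ (forall x y, S x -> S y -> psi (vadd x y) = psi x + psi y) /\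
  (forall a x, S x -> psi (vscal a x) = a * psi x) /\ (forall x, S x -> Rabs (psi x) <= c * vnorm x).

Lemma dominated_sub c S psi x y : dominated c S psi -> S x -> S y ->
  S (vsub x y) /\ psi (vsub x y) = psi x - psi y.
Proof.
  intros [[_ [Ha Hs]] [Pa [Ps _]]] Hx Hy. unfold vsub. rewrite vopp_scal. split.
  - apply Ha; auto.
  - rewrite Pa, Ps; auto. ring.
Qed.

Definition span_add (S : Y -> Prop) (v : Y) : Y -> Prop :=
  fun y => exists s t, S s /\ y = vadd s (vscal t v).

Lemma span_add_incl (S : Y -> Prop) v x : S x -> span_add S v x.
Proof. intros H. exists x, 0. split; auto. now rewrite vscal_0, vadd_0r. Qed.

Lemma span_add_v (S : Y -> Prop) v : subsp S -> span_add S v v.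
Proof. intros [H0 _]. exists vzero, 1. split; auto. now rewrite vscal_1, vadd_0l. Qed.

Lemma span_add_subsp (S : Y -> Prop) v : subsp S -> subsp (span_add S v).
Proof.
  intros [H0 [Ha Hs]]. split; [|split].
  - now apply span_add_incl.
  - intros x y [s1 [t1 [Hs1 ->]]] [s2 [t2 [Hs2 ->]]]. exists (vadd s1 s2), (t1 + t2).
    split; auto. vring.
  - intros a x [s1 [t1 [Hs1 ->]]]. exists (vscal a s1), (a * t1). split; auto. vring.
Qed.

Section OneStep.
Variables (c : R) (S : Y -> Prop) (psi : Y -> R) (v : Y).
Hypotheses (Hc : 0 <= c) (Hg : dominated c S psi).

(** a value [alpha] at [v] compatible with the bound: the supremum of psi s - c ||s - v|| *)
Lemma extension_value : exists alpha, forall s, S s -> Rabs (psi s + alpha) <= c * vnorm (vadd s v).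
Proof.
  destruct Hg as [[S0 [Sa Ss]] [Pa [Ps Pb]]].
  set (A := fun r => exists s, S s /\ r = psi s - c * vnorm (vsub s v)).
  assert (Hub : forall s s', S s -> S s' ->
                  psi s - c * vnorm (vsub s v) <= c * vnorm (vadd s' v) - psi s').
  { intros s s' H1 H2. pose proof (Pb (vadd s s') (Sa _ _ H1 H2)) as B.
    rewrite Pa in B by auto.
    pose proof (vnorm_triangle Y (vsub s v) (vadd s' v)) as T.
    replace (vadd (vsub s v) (vadd s' v)) with (vadd s s') in T by vring.
    pose proof (Rle_abs (psi s + psi s')). nra. }
  assert (Hb : bound A).
  { exists (c * vnorm (vadd vzero v) - psi vzero). intros r [s [Hs ->]]. now apply Hub. }
  assert (Hne : exists r, A r) by (exists (psi vzero - c * vnorm (vsub vzero v)), vzero; auto).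
  destruct (completeness A Hb Hne) as [alpha [Hal1 Hal2]]. exists alpha.
  intros s Hs. apply Rabs_le. split.
  - assert (H : psi (vscal (-1) s) - c * vnorm (vsub (vscal (-1) s) v) <= alpha).
    { apply Hal1. exists (vscal (-1) s). auto. }
    rewrite Ps in H by auto.
    replace (vsub (vscal (-1) s) v) with (vscal (-1) (vadd s v)) in H by vring.
    rewrite vnorm_scal, Rabs_left in H by lra. lra.
  - assert (alpha <= c * vnorm (vadd s v) - psi s).
    { apply Hal2. intros r [s' [Hs' ->]]. now apply Hub. }
    lra.
Qed.

Lemma span_add_unique s1 t1 s2 t2 : ~ S v -> S s1 -> S s2 ->
  vadd s1 (vscal t1 v) = vadd s2 (vscal t2 v) -> s1 = s2 /\ t1 = t2.
Proof.
  intros Hv H1 H2 E. destruct (Req_dec t1 t2) as [<-|Et].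
  - split; auto. replace s1 with (vsub (vadd s1 (vscal t1 v)) (vscal t1 v)) by vring.
    rewrite E. vring.
  - exfalso. apply Hv.
    replace v with (vscal (/ (t1 - t2)) (vsub s2 s1)).
    + apply Hg. now apply (dominated_sub c S psi s2 s1 Hg).
    + replace (vsub s2 s1) with (vsub (vadd s2 (vscal t2 v)) (vadd s1 (vscal t2 v))) by vring.
      rewrite <- E. replace (vsub (vadd s1 (vscal t1 v)) (vadd s1 (vscal t2 v)))
        with (vscal (t1 - t2) v) by vring.
      rewrite vscal_assoc, Rinv_l, vscal_1 by lra. reflexivity.
Qed.

Lemma one_step_extension : exists psi', dominated c (span_add S v) psi' /\
  forall x, S x -> psi' x = psi x.
Proof.
  pose proof Hg as [[S0 [Sa Ss]] [Pa [Ps Pb]]].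
  destruct (classic (S v)) as [Hv|Hv].
  { exists psi. split; auto.
    assert (Hin : forall y, span_add S v y -> S y) by (intros y [s [t [Hs ->]]]; auto).
    split; [now apply span_add_subsp|]. repeat split; auto. }
  destruct extension_value as [alpha Hal].
  set (rep := fun y => epsilon (inhabits (@vzero Y, 0))
                         (fun p => S (fst p) /\ y = vadd (fst p) (vscal (snd p) v))).
  set (psi' := fun y => psi (fst (rep y)) + snd (rep y) * alpha).
  assert (Hrep : forall s t, S s -> psi' (vadd s (vscal t v)) = psi s + t * alpha).
  { intros s t Hs. unfold psi'.
    destruct (epsilon_spec (inhabits (@vzero Y, 0))
               (fun p => S (fst p) /\ vadd s (vscal t v) = vadd (fst p) (vscal (snd p) v)))
      as [H1 H2]; [now exists (s, t)|].
    fold (rep (vadd s (vscal t v))) in H1, H2.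
    destruct (span_add_unique _ _ _ _ Hv Hs H1 H2) as [<- <-]. auto. }
  exists psi'. split; [split; [now apply span_add_subsp|split; [|split]]|].
  - intros x y [s1 [t1 [Hs1 ->]]] [s2 [t2 [Hs2 ->]]].
    replace (vadd (vadd s1 (vscal t1 v)) (vadd s2 (vscal t2 v)))
      with (vadd (vadd s1 s2) (vscal (t1 + t2) v)) by vring.
    rewrite !Hrep, Pa by auto. ring.
  - intros a x [s1 [t1 [Hs1 ->]]].
    replace (vscal a (vadd s1 (vscal t1 v))) with (vadd (vscal a s1) (vscal (a * t1) v)) by vring.
    rewrite !Hrep, Ps by auto. ring.
  - intros x [s [t [Hs ->]]]. rewrite Hrep by auto.
    destruct (Req_dec t 0) as [->|Et].
    { rewrite vscal_0, vadd_0r, Rmult_0_l, Rplus_0_r. auto. }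
    specialize (Hal (vscal (/ t) s) (Ss _ _ Hs)). rewrite Ps in Hal by auto.
    replace (vadd s (vscal t v)) with (vscal t (vadd (vscal (/ t) s) v)) by vring.
    replace (psi s + t * alpha) with (t * (/ t * psi s + alpha)) by (field; auto).
    rewrite Rabs_mult, vnorm_scal. pose proof (Rabs_pos t). nra.
  - intros x Hx. transitivity (psi' (vadd x (vscal 0 v))).
    + now rewrite vscal_0, vadd_0r.
    + rewrite Hrep by auto. ring.
Qed.

End OneStep.

Fixpoint chain (S0 : Y -> Prop) (psi0 : Y -> R)
  (E : (Y -> Prop) * (Y -> R) -> Y -> (Y -> R)) (d : nat -> Y) (k : nat) : (Y -> Prop) * (Y -> R) :=
  match k with
  | O => (S0, psi0)
  | S k => let p := chain S0 psi0 E d k in (span_add (fst p) (d k), E p (d k))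
  end.

Section Chain.
Variables (c : R) (S0 : Y -> Prop) (psi0 : Y -> R) (d : nat -> Y).
Variable E : (Y -> Prop) * (Y -> R) -> Y -> (Y -> R).
Hypothesis HE : forall p v, dominated c (fst p) (snd p) ->
  dominated c (span_add (fst p) v) (E p v) /\ forall x, fst p x -> E p v x = snd p x.
Hypothesis Hg0 : dominated c S0 psi0.

Let ch := chain S0 psi0 E d.

Lemma chain_dominated k : dominated c (fst (ch k)) (snd (ch k)).
Proof. induction k; simpl; auto. now apply HE. Qed.

Lemma chain_increasing k m : (k <= m)%nat ->
  forall x, fst (ch k) x -> fst (ch m) x /\ snd (ch m) x = snd (ch k) x.
Proof.
  intros Hkm. induction Hkm; auto. intros x Hx. destruct (IHHkm x Hx) as [H1 H2]. simpl.
  split; [now apply span_add_incl|]. rewrite <- H2. apply HE; auto. apply chain_dominated.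
Qed.

Lemma chain_union : exists U psi, dominated c U psi /\ (forall n, U (d n)) /\
  forall x, S0 x -> U x /\ psi x = psi0 x.
Proof.
  set (U := fun y => exists k, fst (ch k) y).
  set (psi := fun y => snd (ch (epsilon (inhabits O) (fun k => fst (ch k) y))) y).
  assert (HU : forall k y, fst (ch k) y -> psi y = snd (ch k) y).
  { intros k y Hk. unfold psi. set (k' := epsilon _ _).
    assert (Hk' : fst (ch k') y) by (apply (epsilon_spec (inhabits O) (fun k => fst (ch k) y));
                                     now exists k).
    destruct (chain_increasing k' (Nat.max k k') ltac:(lia) y Hk') as [_ E1].
    destruct (chain_increasing k (Nat.max k k') ltac:(lia) y Hk) as [_ E2]. congruence. }
  assert (Hcommon : forall x y, U x -> U y -> exists k, fst (ch k) x /\ fst (ch k) y).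
  { intros x y [k1 H1] [k2 H2]. exists (Nat.max k1 k2).
    split; [apply (chain_increasing k1)|apply (chain_increasing k2)]; auto; lia. }
  exists U, psi. split; [|split].
  - pose proof chain_dominated as G. split; [split; [|split]|split; [|split]].
    + exists O. apply (G O).
    + intros x y Hx Hy. destruct (Hcommon x y Hx Hy) as [k [H1 H2]]. exists k. now apply (G k).
    + intros a x [k Hx]. exists k. now apply (G k).
    + intros x y Hx Hy. destruct (Hcommon x y Hx Hy) as [k [H1 H2]].
      assert (H3 : fst (ch k) (vadd x y)) by now apply (G k).
      rewrite (HU k _ H3), (HU k _ H1), (HU k _ H2). now apply (G k).
    + intros a x [k Hx]. assert (H3 : fst (ch k) (vscal a x)) by now apply (G k).
      rewrite (HU k _ H3), (HU k _ Hx). now apply (G k).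
    + intros x [k Hx]. rewrite (HU k _ Hx). now apply (G k).
  - intros n. exists (S n). simpl. apply span_add_v. apply chain_dominated.
  - intros x Hx. split; [now exists O|]. now apply (HU O).
Qed.

End Chain.

Section Dense.
Variables (c : R) (U : Y -> Prop) (psi : Y -> R) (d : nat -> Y).
Hypotheses (Hc : 0 <= c) (Hg : dominated c U psi) (Hd : forall n, U (d n)).
Hypothesis Hdense : forall x eps, eps > 0 -> exists n, vnorm (vsub x (d n)) < eps.

Definition approaches (s : nat -> Y) (y : Y) :=
  (forall k, U (s k)) /\ Un_cv (fun k => vnorm (vsub (s k) y)) 0.

Lemma approaches_exists y : exists s, approaches s y.
Proof.
  assert (H : forall k, exists x, U x /\ vnorm (vsub x y) < / INR (S k)).
  { intros k. destruct (Hdense y (/ INR (S k)) (inv_S_pos k)) as [n Hn].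
    exists (d n). rewrite vnorm_sub_sym. auto. }
  apply choice in H. destruct H as [s Hs]. exists s. split; [apply Hs|].
  apply (cv_squeeze0 _ _ cv_inv_S). intros k.
  rewrite Rabs_right by (apply Rle_ge, vnorm_nonneg). left; apply Hs.
Qed.

Lemma approaches_add s t x y : approaches s x -> approaches t y ->
  approaches (fun k => vadd (s k) (t k)) (vadd x y).
Proof.
  intros [Hs Hsx] [Ht Hty]. split; [intros; now apply Hg|].
  apply (cv_squeeze0 _ (fun k => vnorm (vsub (s k) x) + vnorm (vsub (t k) y))).
  { replace 0 with (0 + 0) by ring. now apply CV_plus. }
  intros k. rewrite Rabs_right by (apply Rle_ge, vnorm_nonneg).
  replace (vsub (vadd (s k) (t k)) (vadd x y)) with (vadd (vsub (s k) x) (vsub (t k) y)) by vring.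
  apply vnorm_triangle.
Qed.

Lemma approaches_scal s a y : approaches s y -> approaches (fun k => vscal a (s k)) (vscal a y).
Proof.
  intros [Hs Hsy]. split; [intros; now apply Hg|].
  apply (cv_squeeze0 _ (fun k => Rabs a * vnorm (vsub (s k) y))).
  { replace 0 with (Rabs a * 0) by ring. apply CV_mult; auto. apply cv_const. }
  intros k. rewrite Rabs_right by (apply Rle_ge, vnorm_nonneg).
  replace (vsub (vscal a (s k)) (vscal a y)) with (vscal a (vsub (s k) y)) by vring.
  rewrite vnorm_scal. lra.
Qed.

Lemma dominated_lipschitz s t y : U s -> U t ->
  Rabs (psi s - psi t) <= c * (vnorm (vsub s y) + vnorm (vsub t y)).
Proof.
  intros Hs Ht. destruct (dominated_sub c U psi s t Hg Hs Ht) as [Hst <-].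
  eapply Rle_trans. apply (proj2 (proj2 (proj2 Hg))); auto.
  apply Rmult_le_compat_l; auto. eapply Rle_trans. apply (vnorm_sub_tri Y _ y).
  rewrite (vnorm_sub_sym Y y). lra.
Qed.

Lemma approaches_limit y : exists L, forall s, approaches s y -> Un_cv (fun k => psi (s k)) L.
Proof.
  destruct (approaches_exists y) as [s0 [Hs0 Hs0y]].
  assert (Cc : Cauchy_crit (fun k => psi (s0 k))).
  { intros e He. destruct (cv_0_eventually_lt _ Hs0y (e / (2 * (c + 1)))) as [N HN].
    { apply Rdiv_lt_0_compat; lra. }
    exists N. intros n m Hn Hm. unfold R_dist.
    eapply Rle_lt_trans. apply (dominated_lipschitz _ _ y); auto.
    pose proof (HN n Hn). pose proof (HN m Hm).
    assert ((c + 1) * (e / (2 * (c + 1))) = e / 2) by (field; lra). nra. }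
  destruct (R_complete _ Cc) as [L HL]. exists L. intros s [Hs Hsy].
  apply (cv_dist_tri _ _ L HL).
  apply (cv_squeeze0 _ (fun k => c * (vnorm (vsub (s k) y) + vnorm (vsub (s0 k) y)))).
  - replace 0 with (c * (0 + 0)) by ring. apply CV_mult; [apply cv_const|]. now apply CV_plus.
  - intros k. now apply dominated_lipschitz.
Qed.

Lemma extend_from_dense :
  exists Phi, dual_elem Phi /\ (forall x, U x -> Phi x = psi x) /\
    (forall y, Rabs (Phi y) <= c * vnorm y).
Proof.
  pose proof (fun y => approaches_limit y) as HL. apply choice in HL. destruct HL as [Phi HPhi].
  destruct Hg as [[_ [Uadd Uscal]] [Padd [Pscal Pb]]].
  assert (Hbd : forall y, Rabs (Phi y) <= c * vnorm y).
  { intros y. destruct (approaches_exists y) as [s [Hs Hsy]].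
    replace (c * vnorm y) with (c * (vnorm y + 0)) by ring.
    apply (Rle_cv_lim (Un := fun k => Rabs (psi (s k)))
                      (Vn := fun k => c * (vnorm y + vnorm (vsub (s k) y)))).
    - intros k. eapply Rle_trans. apply (Pb _ (Hs k)). apply Rmult_le_compat_l; auto.
      replace (s k) with (vadd y (vsub (s k) y)) at 1 by vring. apply vnorm_triangle.
    - apply cv_cvabs, HPhi. now split.
    - apply CV_mult; [apply cv_const|]. apply CV_plus; auto. apply cv_const. }
  exists Phi. split; [split; [split|]|split]; auto.
  - intros x y. destruct (approaches_exists x) as [s Hs]. destruct (approaches_exists y) as [t Ht].
    apply (UL_sequence (fun k => psi (vadd (s k) (t k)))).
    + apply HPhi. now apply approaches_add.
    + replace (fun k => psi (vadd (s k) (t k))) with (fun k => psi (s k) + psi (t k)).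
      * apply CV_plus; auto.
      * apply functional_extensionality; intros k. rewrite Padd; auto; [apply Hs|apply Ht].
  - intros a y. destruct (approaches_exists y) as [s Hs].
    apply (UL_sequence (fun k => psi (vscal a (s k)))).
    + apply HPhi. now apply approaches_scal.
    + replace (fun k => psi (vscal a (s k))) with (fun k => a * psi (s k)).
      * apply CV_mult; [apply cv_const|]. auto.
      * apply functional_extensionality; intros k. rewrite Pscal; auto. apply Hs.
  - now exists c.
  - intros x Hx. apply (UL_sequence (fun _ => psi x)); [|apply cv_const].
    apply HPhi. split; auto. replace (vsub x x) with (@vzero Y) by vring.
    rewrite vnorm_zero. apply cv_const.
Qed.

End Dense.

Theorem hahn_banach_separable c (S0 : Y -> Prop) psi0 : 0 <= c -> separable Y ->
  dominated c S0 psi0 ->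
  exists Phi, dual_elem Phi /\ (forall x, S0 x -> Phi x = psi0 x) /\
    (forall y, Rabs (Phi y) <= c * vnorm y).
Proof.
  intros Hc [d Hd] Hg0.
  assert (HE : forall p : (Y -> Prop) * (Y -> R), exists F : Y -> (Y -> R), forall v,
    dominated c (fst p) (snd p) ->
    dominated c (span_add (fst p) v) (F v) /\ forall x, fst p x -> F v x = snd p x).
  { intros p. apply (choice (fun v psi' => dominated c (fst p) (snd p) ->
      dominated c (span_add (fst p) v) psi' /\ forall x, fst p x -> psi' x = snd p x)).
    intros v.
    destruct (classic (dominated c (fst p) (snd p))) as [H|H].
    - destruct (one_step_extension c (fst p) (snd p) v Hc H) as [psi' Hp]. now exists psi'.
    - exists (snd p). intros; contradiction. }
  apply choice in HE. destruct HE as [E HE].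
  destruct (chain_union c S0 psi0 d E HE Hg0) as [U [psi [GU [Hdn Hsub]]]].
  destruct (extend_from_dense c U psi d Hc GU Hdn Hd) as [Phi [H1 [H2 H3]]].
  exists Phi. split; auto. split; auto. intros x Hx. destruct (Hsub x Hx) as [HUx <-]. auto.
Qed.

End HahnBanach.

(** ** The uniform boundedness principle (Sokal's "sliding hump" proof) *)

Section UniformBoundedness.
Variable X : NormedSpace.

Lemma sokal_lemma (f : X -> R) x r : dual_elem f -> r > 0 ->
  exists y, vnorm (vsub y x) <= r /\ 2 / 3 * r * dnorm f <= Rabs (f y).
Proof.
  intros Hf Hr. pose proof (dnorm_nonneg X f Hf).
  destruct (Req_dec (dnorm f) 0) as [E|E].
  { exists x. replace (vsub x x) with (@vzero X) by vring. rewrite vnorm_zero, E.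
    split; [lra|]. rewrite Rmult_0_r. apply Rabs_pos. }
  assert (Hz : exists z, vnorm z <= 1 /\ 2 / 3 * dnorm f < Rabs (f z)).
  { apply NNPP. intros Hn. enough (dnorm f <= 2 / 3 * dnorm f) by lra.
    apply dnorm_le; auto. intros z Hz. apply Rnot_lt_le. intros Hl. apply Hn. now exists z. }
  destruct Hz as [z [Hz1 Hz2]].
  assert (Hlf : linear_functional f) by apply Hf.
  assert (E1 : f (vadd x (vscal r z)) - f (vsub x (vscal r z)) = 2 * r * f z).
  { rewrite lf_add, lf_sub, lf_scal by auto. ring. }
  assert (Hrz : vnorm (vscal r z) <= r) by (rewrite vnorm_scal, Rabs_right by lra; nra).
  destruct (Rle_dec (r * Rabs (f z)) (Rabs (f (vadd x (vscal r z))))) as [H1|H1].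
  - exists (vadd x (vscal r z)). split; [|nra].
    now replace (vsub (vadd x (vscal r z)) x) with (vscal r z) by vring.
  - exists (vsub x (vscal r z)). split.
    + replace (vsub (vsub x (vscal r z)) x) with (vopp (vscal r z)) by vring.
      now rewrite vnorm_opp.
    + assert (H2 : Rabs (2 * r * f z) <= Rabs (f (vadd x (vscal r z))) + Rabs (f (vsub x (vscal r z)))).
      { rewrite <- E1. unfold Rminus. eapply Rle_trans. apply Rabs_triang. rewrite Rabs_Ropp. lra. }
      rewrite !Rabs_mult, (Rabs_right 2), (Rabs_right r) in H2 by lra. nra.
Qed.

Fixpoint iter_seq {T : Type} (F : nat -> T -> T) (x0 : T) (k : nat) : T :=
  match k with O => x0 | S k => F k (iter_seq F x0 k) end.

Lemma geometric_iteration (F : nat -> X -> X) : Banach X ->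
  (forall k x, vnorm (vsub (F k x) x) <= (/ 3) ^ (S k)) ->
  exists l, forall k, vnorm (vsub l (iter_seq F vzero k)) <= / 2 * (/ 3) ^ k.
Proof.
  intros HB HF. set (xk := iter_seq F vzero).
  assert (Hgeo : forall k m, (k <= m)%nat ->
                   vnorm (vsub (xk m) (xk k)) <= / 2 * ((/ 3) ^ k - (/ 3) ^ m)).
  { intros k m Hkm. induction Hkm.
    - replace (vsub (xk k) (xk k)) with (@vzero X) by vring. rewrite vnorm_zero. lra.
    - pose proof (HF m (xk m)). pose proof (vnorm_sub_tri X (F m (xk m)) (xk m) (xk k)).
      change (xk (S m)) with (F m (xk m)). simpl pow in *. lra. }
  assert (Hp : forall n, 0 <= (/ 3) ^ n) by (intros; apply pow_le; lra).
  assert (Hcau : cauchy xk).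
  { intros e He. destruct (pow_lt_1_zero (/ 3) ltac:(rewrite Rabs_right by lra; lra) e He) as [N HN].
    exists N. intros m n Hm Hn. specialize (HN N (le_n N)). rewrite Rabs_right in HN by (apply Rle_ge; auto).
    pose proof (Hgeo N m Hm). pose proof (Hgeo N n Hn).
    pose proof (vnorm_sub_tri X (xk m) (xk N) (xk n)). rewrite (vnorm_sub_sym X (xk N)) in H1.
    pose proof (Hp m). pose proof (Hp n). lra. }
  destruct (HB xk Hcau) as [l Hl]. exists l. intros k.
  enough (vnorm (vsub l (xk k)) - / 2 * (/ 3) ^ k <= 0) by lra.
  apply (le_cv_0 _ (fun m => vnorm (vsub (xk (m + k)%nat) l))).
  - intros e He. destruct (Hl e He) as [N HN]. exists N. intros n Hn. unfold R_dist.
    rewrite Rminus_0_r, Rabs_right by (apply Rle_ge, vnorm_nonneg). apply HN. lia.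
  - intros m. pose proof (Hgeo k (m + k)%nat ltac:(lia)).
    pose proof (vnorm_sub_tri X l (xk (m + k)%nat) (xk k)).
    rewrite (vnorm_sub_sym X l (xk (m + k)%nat)) in H0. pose proof (Hp (m + k)%nat). lra.
Qed.

(** pointwise bounded sequences of functionals on a Banach space are norm bounded: otherwise
   humps of size ~3^-k around a convergent sequence produce a point where h_n is unbounded *)
Theorem uniform_boundedness (h : nat -> X -> R) : Banach X -> (forall n, dual_elem (h n)) ->
  (forall x, exists B, forall n, Rabs (h n x) <= B) -> exists B, forall n, dnorm (h n) <= B.
Proof.
  intros HB Hd Hpt. apply NNPP. intros Hno.
  assert (Hbig : forall k : nat, exists n, 6 * INR (S k) * 3 ^ (S k) < dnorm (h n)).
  { intros k. apply NNPP. intros Hn. apply Hno. exists (6 * INR (S k) * 3 ^ (S k)). intros n.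
    apply Rnot_lt_le. intros Hl. apply Hn. now exists n. }
  apply choice in Hbig. destruct Hbig as [nk Hnk].
  assert (HF : forall k, exists F : X -> X, forall x, vnorm (vsub (F x) x) <= (/ 3) ^ (S k) /\
                 2 / 3 * (/ 3) ^ (S k) * dnorm (h (nk k)) <= Rabs (h (nk k) (F x))).
  { intros k. apply (choice (fun x y => vnorm (vsub y x) <= (/ 3) ^ (S k) /\
                 2 / 3 * (/ 3) ^ (S k) * dnorm (h (nk k)) <= Rabs (h (nk k) y))).
    intros x. apply sokal_lemma; [apply Hd|]. apply pow_lt. lra. }
  apply choice in HF. destruct HF as [F HFs].
  destruct (geometric_iteration F HB (fun k x => proj1 (HFs k x))) as [l Hl].
  destruct (Hpt l) as [B HBd]. destruct (INR_archimed 1 B ltac:(lra)) as [k Hk].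
  specialize (HBd (nk k)). pose proof (proj2 (HFs k (iter_seq F vzero k))) as H2.
  change (F k (iter_seq F vzero k)) with (iter_seq F vzero (S k)) in H2.
  pose proof (Hl (S k)) as Hlk.
  set (D := dnorm (h (nk k))) in *. set (p := (/ 3) ^ (S k)) in *.
  assert (Hl1 : Rabs (h (nk k) (iter_seq F vzero (S k))) - Rabs (h (nk k) l)
                <= D * vnorm (vsub l (iter_seq F vzero (S k)))).
  { pose proof (dnorm_bound X (h (nk k)) (vsub l (iter_seq F vzero (S k))) (Hd _)) as B1.
    rewrite lf_sub in B1 by apply Hd.
    pose proof (Rabs_triang_inv (h (nk k) (iter_seq F vzero (S k))) (h (nk k) l)).
    rewrite Rabs_minus_sym in B1. fold D in B1. lra. }
  pose proof (Hnk k) as Hk'. pose proof (dnorm_nonneg X _ (Hd (nk k))).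
  assert (Hp3 : p * 3 ^ (S k) = 1) by (unfold p; rewrite pow_inv; field; apply pow_nonzero; lra).
  assert (Hp0 : 0 < p) by (apply pow_lt; lra).
  assert (D * vnorm (vsub l (iter_seq F vzero (S k))) <= D * (/ 2 * p))
    by (apply Rmult_le_compat_l; auto).
  assert (/ 6 * p * D > INR (S k)).
  { assert (Hq : p * (6 * INR (S k) * 3 ^ S k) < p * D) by (apply Rmult_lt_compat_l; auto).
    replace (p * (6 * INR (S k) * 3 ^ S k)) with (6 * INR (S k) * (p * 3 ^ S k)) in Hq by ring.
    rewrite Hp3 in Hq. lra. }
  rewrite S_INR in *. lra.
Qed.

End UniformBoundedness.

Definition strict (f : nat -> nat) := forall n, (f n < f (S n))%nat.

Lemma strict_mono f : strict f -> forall n m, (n < m)%nat -> (f n < f m)%nat.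
Proof. intros H n m Hnm. induction Hnm; [apply H|]. specialize (H m). lia. Qed.

Lemma strict_ge f : strict f -> forall n, (n <= f n)%nat.
Proof. intros H n. induction n; [lia|]. specialize (H n). lia. Qed.

Lemma strict_comp f g : strict f -> strict g -> strict (fun n => f (g n)).
Proof. intros Hf Hg n. now apply strict_mono. Qed.

Lemma cv_subseq (s : nat -> R) l f : strict f -> Un_cv s l -> Un_cv (fun n => s (f n)) l.
Proof.
  intros Hf Hs e He. destruct (Hs e He) as [N HN]. exists N. intros n Hn. apply HN.
  pose proof (strict_ge f Hf n). lia.
Qed.

Lemma bounded_convergent_subseq (s : nat -> R) M : (forall n, Rabs (s n) <= M) ->
  exists f l, strict f /\ Un_cv (fun n => s (f n)) l.
Proof.
  intros HM. destruct (Bolzano_Weierstrass s (fun c => -M <= c <= M) (compact_P3 (-M) M)) as [l Hl].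
  { intros n. specialize (HM n). pose proof (Rle_abs (s n)). pose proof (Rle_abs (- s n)).
    rewrite Rabs_Ropp in *. lra. }
  assert (HG : forall n k, exists p, (n < p)%nat /\ Rabs (s p - l) < / INR (S k)).
  { intros n k. set (del := mkposreal _ (inv_S_pos k)).
    destruct (Hl (disc l del) (S n)) as [p [Hp1 Hp2]]; [now exists del|].
    exists p. split; [lia|]. apply Hp2. }
  assert (HG2 : forall n, exists g : nat -> nat, forall k, (n < g k)%nat /\ Rabs (s (g k) - l) < / INR (S k)).
  { intros n. apply (choice (fun k p => (n < p)%nat /\ Rabs (s p - l) < / INR (S k))). apply HG. }
  apply choice in HG2. destruct HG2 as [G HG3].
  set (f := fix f k := match k with O => G O O | S k => G (f k) (S k) end).
  exists f, l. split.
  - intros n. simpl. apply HG3.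
  - apply (cv_dist_tri (fun _ => l)); [apply cv_const|].
    apply (cv_squeeze0 _ _ cv_inv_S). intros n. destruct n; simpl; left; apply HG3.
Qed.

(** iterated extraction: [diag sel s i] is extracted from [diag sel s (i-1)] by [sel] so as to
   make row [i] of [s] converge *)
Fixpoint diag (sel : (nat -> R) -> nat -> nat) (s : nat -> nat -> R) (i : nat) : nat -> nat :=
  match i with
  | O => sel (s O)
  | S i => fun n => diag sel s i (sel (fun m => s (S i) (diag sel s i m)) n)
  end.

Section Diagonal.
Variables (s : nat -> nat -> R) (Bd : nat -> R).
Hypothesis HB : forall i n, Rabs (s i n) <= Bd i.
Variable sel : (nat -> R) -> nat -> nat.
Hypothesis Hsel : forall t, strict (sel t) /\
  ((exists M, forall n, Rabs (t n) <= M) -> exists l, Un_cv (fun n => t (sel t n)) l).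

Lemma diag_converges i : strict (diag sel s i) /\ exists l, Un_cv (fun k => s i (diag sel s i k)) l.
Proof.
  induction i.
  - destruct (Hsel (s O)) as [H1 H2]. split; auto. apply H2. now exists (Bd O).
  - destruct IHi as [Hs _]. destruct (Hsel (fun m => s (S i) (diag sel s i m))) as [H1 H2]. split.
    + intros n. simpl. apply strict_mono; [exact Hs | exact (H1 n)].
    + apply H2. now exists (Bd (S i)).
Qed.

Lemma diag_tail i m : (i <= m)%nat ->
  forall n, exists t, (n <= t)%nat /\ diag sel s m n = diag sel s i t.
Proof.
  intros Him. induction Him; intros n; [now exists n|].
  destruct (Hsel (fun k => s (S m) (diag sel s m k))) as [H1 _].
  destruct (IHHim (sel (fun k => s (S m) (diag sel s m k)) n)) as [t [Ht1 Ht2]].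
  exists t. split; [pose proof (strict_ge _ H1 n); lia|]. simpl. now rewrite <- Ht2.
Qed.

End Diagonal.

Lemma diagonal_subseq (s : nat -> nat -> R) (Bd : nat -> R) : (forall i n, Rabs (s i n) <= Bd i) ->
  exists sig : nat -> nat, strict sig /\ forall i, exists l, Un_cv (fun k => s i (sig k)) l.
Proof.
  intros HB.
  assert (Hsel : forall t : nat -> R, exists g, strict g /\
            ((exists M, forall n, Rabs (t n) <= M) -> exists l, Un_cv (fun n => t (g n)) l)).
  { intros t. destruct (classic (exists M, forall n, Rabs (t n) <= M)) as [[M HM]|Hn].
    - destruct (bounded_convergent_subseq t M HM) as [g [l [H1 H2]]]. exists g.
      split; auto. intros; now exists l.
    - exists (fun n => n). split; [intros n; lia|]. intros; contradiction. }
  apply choice in Hsel. destruct Hsel as [sel Hsel].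
  exists (fun k => diag sel s k k). split.
  - intros k. destruct (diag_tail s sel Hsel k (S k) ltac:(lia) (S k)) as [t [Ht1 ->]].
    apply strict_mono; [apply (diag_converges s Bd HB sel Hsel)|]. lia.
  - intros i. destruct (diag_converges s Bd HB sel Hsel i) as [_ [l Hl]]. exists l.
    intros e He. destruct (Hl e He) as [N HN].
    exists (Nat.max i N). intros k Hk. destruct (diag_tail s sel Hsel i k ltac:(lia) k) as [t [Ht1 ->]].
    apply HN. lia.
Qed.

Section WeakStarCompact.
Variables (Y : NormedSpace) (Phi : nat -> Y -> R) (K : R).
Hypotheses (HK : 0 <= K) (HPd : forall k, dual_elem (Phi k))
  (HPb : forall k y, Rabs (Phi k y) <= K * vnorm y).

Lemma pointwise_cauchy (d : nat -> Y) (sig : nat -> nat) :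
  (forall x eps, eps > 0 -> exists n, vnorm (vsub x (d n)) < eps) ->
  (forall i, exists l, Un_cv (fun k => Phi (sig k) (d i)) l) ->
  forall y, Cauchy_crit (fun k => Phi (sig k) y).
Proof.
  intros Hd Hconv y e He.
  destruct (Hd y (e / (4 * (K + 1)))) as [i Hi]. { apply Rdiv_lt_0_compat; lra. }
  destruct (Hconv i) as [l Hl]. destruct (Hl (e / 4) ltac:(lra)) as [N HN].
  exists N. intros n m Hn Hm. unfold R_dist in *.
  assert (Hlin : forall k, Phi k y - Phi k (d i) = Phi k (vsub y (d i)))
    by (intros k; rewrite lf_sub; auto; apply HPd).
  pose proof (HPb (sig n) (vsub y (d i))) as Bn. pose proof (HPb (sig m) (vsub y (d i))) as Bm.
  rewrite <- Hlin in Bn, Bm. pose proof (HN n Hn). pose proof (HN m Hm).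
  assert (K * vnorm (vsub y (d i)) <= e / 4).
  { pose proof (vnorm_nonneg Y (vsub y (d i))).
    assert ((K + 1) * (e / (4 * (K + 1))) = e / 4) by (field; lra). nra. }
  replace (Phi (sig n) y - Phi (sig m) y) with
    ((Phi (sig n) y - Phi (sig n) (d i)) + (Phi (sig n) (d i) - l)
     - (Phi (sig m) (d i) - l) - (Phi (sig m) y - Phi (sig m) (d i))) by ring.
  eapply Rle_lt_trans; [apply Rabs_triang4|]. lra.
Qed.

Lemma pointwise_limit_dual (sig : nat -> nat) (u : Y -> R) :
  (forall y, Un_cv (fun k => Phi (sig k) y) (u y)) -> dual_elem u.
Proof.
  intros Hu. split; [split|].
  - intros x y. apply (UL_sequence (fun k => Phi (sig k) (vadd x y))); auto.
    replace (fun k => Phi (sig k) (vadd x y)) with (fun k => Phi (sig k) x + Phi (sig k) y).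
    + now apply CV_plus.
    + apply functional_extensionality; intros. rewrite lf_add; auto. apply HPd.
  - intros a x. apply (UL_sequence (fun k => Phi (sig k) (vscal a x))); auto.
    replace (fun k => Phi (sig k) (vscal a x)) with (fun k => a * Phi (sig k) x).
    + apply CV_mult; auto. apply cv_const.
    + apply functional_extensionality; intros. rewrite lf_scal; auto. apply HPd.
  - exists K. intros y. apply (Rle_cv_lim (fun k => HPb (sig k) y)); [|apply cv_const].
    apply cv_cvabs, Hu.
Qed.

Theorem weak_star_compact : separable Y ->
  exists sig u, strict sig /\ dual_elem u /\ (forall y, Un_cv (fun k => Phi (sig k) y) (u y)).
Proof.
  intros [d Hd].
  destruct (diagonal_subseq (fun i n => Phi n (d i)) (fun i => K * vnorm (d i))) as [sig [Hsig Hconv]].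
  { intros; apply HPb. }
  assert (Hy : forall y, exists l, Un_cv (fun k => Phi (sig k) y) l).
  { intros y. destruct (R_complete _ (pointwise_cauchy d sig Hd Hconv y)) as [l Hl]. now exists l. }
  apply choice in Hy. destruct Hy as [u Hu].
  exists sig, u. split; auto. split; auto. now apply (pointwise_limit_dual sig).
Qed.

End WeakStarCompact.

(** ** Part (ii): closed subspaces *)

Section Subspace.
Variables (Y : NormedSpace) (P : Y -> Prop) (HP : closed_subspace Y P).
Notation X := (subspace Y P HP).

Definition iota (x : X) : Y := proj1_sig x.

Lemma iota_sub (x y : X) : iota (vsub x y) = vsub (iota x) (iota y).
Proof. unfold iota, vsub. simpl. now rewrite vopp_scal. Qed.

Lemma restr_dual (g : Y -> R) : dual_elem g -> dual_elem (fun x : X => g (iota x)).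
Proof.
  intros Hg. split; [split|].
  - intros x y. apply lf_add, Hg.
  - intros a x. apply lf_scal, Hg.
  - exists (dnorm g). intros x. exact (dnorm_bound Y g (iota x) Hg).
Qed.

Lemma restr_dnorm (g : Y -> R) : dual_elem g -> dnorm (fun x : X => g (iota x)) <= dnorm g.
Proof.
  intros Hg. apply dnorm_le_C; [now apply restr_dual|now apply dnorm_nonneg|].
  intros x. exact (dnorm_bound Y g (iota x) Hg).
Qed.

(** subspaces of separable spaces are separable: pick, for each point of a dense sequence
   of Y and each radius 1/(k+1), a point of X that close to it whenever one exists *)
Lemma subspace_separable : separable Y -> separable X.
Proof.
  intros [d Hd].
  assert (Hc : forall n k : nat, exists p : X,
     (exists x : X, vnorm (vsub (iota x) (d n)) < / INR (S k)) ->
     vnorm (vsub (iota p) (d n)) < / INR (S k)).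
  { intros n k. destruct (classic (exists x : X, vnorm (vsub (iota x) (d n)) < / INR (S k)))
      as [[x Hx]|H].
    - now exists x.
    - exists (sub_zero Y P HP). intros; contradiction. }
  assert (Hc2 : forall n, exists F : nat -> X, forall k,
     (exists x : X, vnorm (vsub (iota x) (d n)) < / INR (S k)) ->
     vnorm (vsub (iota (F k)) (d n)) < / INR (S k)).
  { intros n. apply (choice (fun k p => (exists x : X, vnorm (vsub (iota x) (d n)) < / INR (S k)) ->
     vnorm (vsub (iota p) (d n)) < / INR (S k))). apply Hc. }
  apply choice in Hc2. destruct Hc2 as [F HF].
  exists (fun m => let (n, k) := Cantor.of_nat m in F n k). intros x eps He.
  destruct (small_inv (eps / 2) ltac:(lra)) as [k Hk]. specialize (Hk k (le_n k)).
  destruct (Hd (iota x) (/ INR (S k)) (inv_S_pos k)) as [n Hn].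
  exists (Cantor.to_nat (n, k)). rewrite Cantor.cancel_of_to.
  assert (H1 : vnorm (vsub (iota (F n k)) (d n)) < / INR (S k)) by (apply HF; now exists x).
  change (vnorm (iota (vsub x (F n k))) < eps). rewrite iota_sub.
  eapply Rle_lt_trans. apply (vnorm_sub_tri Y _ (d n)). rewrite (vnorm_sub_sym Y (d n)). lra.
Qed.

Lemma subspace_banach : Banach Y -> Banach X.
Proof.
  intros HB u Hu. destruct (HB (fun n => iota (u n))) as [l Hl].
  { intros e He. destruct (Hu e He) as [N HN]. exists N. intros m n Hm Hn.
    rewrite <- iota_sub. now apply HN. }
  pose proof HP as [_ [_ [_ Hcl]]].
  assert (Pl : P l) by (apply (Hcl (fun n => iota (u n))); auto; intros; apply (proj2_sig (u n))).
  exists (exist _ l Pl). intros e He. destruct (Hl e He) as [N HN]. exists N. intros n Hn.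
  change (vnorm (iota (vsub (u n) (exist _ l Pl))) < e). rewrite iota_sub. now apply HN.
Qed.

Lemma subspace_extension (phi : X -> R) : separable Y -> dual_elem phi ->
  exists Phi, dual_elem Phi /\ (forall x : X, Phi (iota x) = phi x) /\
    (forall y, Rabs (Phi y) <= dnorm phi * vnorm y).
Proof.
  intros HsY Hphi.
  set (psi0 := fun y : Y => match excluded_middle_informative (P y) with
                            | left H => phi (exist _ y H) | right _ => 0 end).
  assert (Hpsi : forall y (H : P y), psi0 y = phi (exist _ y H)).
  { intros y H. unfold psi0. destruct (excluded_middle_informative (P y)); [|contradiction].
    f_equal. now apply sub_eq. }
  pose proof HP as [H0 [Ha [Hs Hcl]]].
  assert (G : dominated Y (dnorm phi) P psi0).
  { split; [split; [|split]|split; [|split]]; auto.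
    - intros x y Hx Hy. rewrite (Hpsi _ (Ha _ _ Hx Hy)), (Hpsi _ Hx), (Hpsi _ Hy).
      rewrite <- lf_add by apply Hphi. f_equal. now apply sub_eq.
    - intros a x Hx. rewrite (Hpsi _ (Hs _ _ Hx)), (Hpsi _ Hx).
      rewrite <- lf_scal by apply Hphi. f_equal. now apply sub_eq.
    - intros x Hx. rewrite (Hpsi _ Hx). apply (dnorm_bound X phi (exist _ x Hx) Hphi). }
  destruct (hahn_banach_separable Y (dnorm phi) P psi0 (dnorm_nonneg X phi Hphi) HsY G)
    as [Phi [D1 [D2 D3]]].
  exists Phi. split; auto. split; auto. intros [x Hx]. unfold iota; simpl. rewrite D2 by auto.
  apply Hpsi.
Qed.

Section OneSided.
Hypotheses (HB : Banach Y) (Hau : has_au_star Y).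
Variables (xs : X -> R) (h : nat -> X -> R).
Hypotheses (Hxs : dual_elem xs) (Hh : weak_star_null h).

(** extensions to Y of the functionals x^* - h_n, uniformly bounded by the UBP *)
Lemma bounded_extensions : exists K (Phi : nat -> Y -> R), 0 <= K /\
  forall n, dual_elem (Phi n) /\ (forall x : X, Phi n (iota x) = xs x - h n x) /\
    (forall y, Rabs (Phi n y) <= dnorm (fun x => xs x - h n x) * vnorm y) /\
    dnorm (fun x => xs x - h n x) <= K.
Proof.
  destruct Hh as [Hhd Hhw].
  destruct (uniform_boundedness X h (subspace_banach HB) Hhd) as [B HBd].
  { intros x. now apply (cv_bounded _ 0). }
  assert (Hphi : forall n, dual_elem (fun x => xs x - h n x)) by (intros; now apply dual_sub).
  assert (Hext : forall n, exists Phi, dual_elem Phi /\ (forall x : X, Phi (iota x) = xs x - h n x) /\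
                   (forall y, Rabs (Phi y) <= dnorm (fun x => xs x - h n x) * vnorm y))
    by (intros n; apply subspace_extension; [apply Hau|now apply dual_sub]).
  apply choice in Hext. destruct Hext as [Phi HPhi].
  pose proof (dnorm_nonneg X _ Hxs). pose proof (dnorm_nonneg X _ (Hhd O)). pose proof (HBd O).
  exists (dnorm xs + B), Phi. split; [lra|]. intros n. repeat split; try apply HPhi.
  apply dnorm_le_C; auto; [lra|]. intros x.
  pose proof (dnorm_bound X xs x Hxs). pose proof (dnorm_bound X _ x (Hhd n)).
  pose proof (HBd n). pose proof (vnorm_nonneg X x). unfold Rminus.
  eapply Rle_trans. apply Rabs_triang. rewrite Rabs_Ropp. nra.
Qed.

(** along any subsequence some index satisfies the one-sided estimate: extend x^* - h_(sg k),
   extract a weak^* limit u (an extension of x^* ) and apply (au^* ) of Y to u and u - Phi_k *)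
Lemma one_sided_along_subsequence (sg : nat -> nat) eps : strict sg -> eps > 0 ->
  exists j, dnorm (fun x => xs x + h (sg j) x) <= dnorm (fun x => xs x - h (sg j) x) + eps.
Proof.
  intros Hsg Heps. destruct bounded_extensions as [K [Phi [HK HPhi]]].
  destruct (weak_star_compact Y (fun k => Phi (sg k)) K HK) as [tau [u [Htau [Hu Hconv]]]];
    [| |apply Hau|].
  { intros; apply HPhi. }
  { intros k y. eapply Rle_trans; [apply HPhi|].
    apply Rmult_le_compat_r; [apply vnorm_nonneg|apply HPhi]. }
  set (w := fun k y => u y - Phi (sg (tau k)) y).
  assert (Hwd : forall k, dual_elem (w k)) by (intros; apply dual_sub; auto; apply HPhi).
  assert (Hww : forall y, Un_cv (fun k => w k y) 0).
  { intros y. unfold w. replace 0 with (u y - u y) by ring. apply CV_minus; auto. apply cv_const. }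
  assert (Hux : forall x : X, u (iota x) = xs x).
  { intros x. apply (UL_sequence (fun k => Phi (sg (tau k)) (iota x))); auto.
    replace (fun k => Phi (sg (tau k)) (iota x)) with (fun k => xs x - h (sg (tau k)) x)
      by (apply functional_extensionality; intros k; symmetry; apply HPhi).
    assert (Hc : Un_cv (fun k => xs x - h (sg (tau k)) x) (xs x - 0)).
    { apply CV_minus; [apply cv_const|].
      apply (cv_subseq (fun n => h n x)); [now apply strict_comp|apply Hh]. }
    now rewrite Rminus_0_r in Hc. }
  destruct (proj2 Hau u w Hu Hwd Hww eps Heps) as [N HN]. specialize (HN N (le_n N)).
  unfold R_dist in HN. rewrite Rminus_0_r in HN. apply Rabs_def2 in HN.
  exists (tau N).
  assert (E1 : dnorm (fun x => u x - w N x) <= dnorm (fun x => xs x - h (sg (tau N)) x)).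
  { rewrite (dnorm_ext Y (fun x => u x - w N x) (Phi (sg (tau N)))) by (intros y; unfold w; cbv beta; ring).
    apply dnorm_le_C; try apply HPhi. apply dnorm_nonneg, dual_sub; [exact Hxs|apply Hh]. }
  assert (E2 : dnorm (fun x => xs x + h (sg (tau N)) x) <= dnorm (fun x => u x + w N x)).
  { eapply Rle_trans; [|apply (restr_dnorm (fun x => u x + w N x)); now apply dual_add].
    right. apply dnorm_ext. intros x. unfold w. rewrite Hux, (proj1 (proj2 (HPhi _))). ring. }
  lra.
Qed.

(** hence the estimate holds eventually: otherwise it fails along a subsequence *)
Lemma subspace_one_sided : forall eps, eps > 0 -> exists M, forall n, (M <= n)%nat ->
  dnorm (fun x => xs x + h n x) <= dnorm (fun x => xs x - h n x) + eps.
Proof.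
  intros eps Heps. apply NNPP. intros Hno.
  assert (Hg : forall M, exists n, (M <= n)%nat /\
                 dnorm (fun x => xs x - h n x) + eps < dnorm (fun x => xs x + h n x)).
  { intros M. apply NNPP. intros Hn. apply Hno. exists M. intros n Hmn.
    apply Rnot_lt_le. intros Hl. apply Hn. now exists n. }
  apply choice in Hg. destruct Hg as [g Hg].
  set (sg := fix sg k := match k with O => g O | S k => g (S (sg k)) end).
  assert (Hsg : strict sg) by (intros k; simpl; pose proof (proj1 (Hg (S (sg k)))); lia).
  destruct (one_sided_along_subsequence sg eps Hsg Heps) as [j Hj].
  assert (Hbad : dnorm (fun x => xs x - h (sg j) x) + eps < dnorm (fun x => xs x + h (sg j) x))
    by (destruct j; simpl; apply Hg).
  lra.
Qed.

End OneSided.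

Lemma subspace_au_star : Banach Y -> has_au_star Y -> has_au_star X.
Proof.
  intros HB Hau. apply au_from_one_sided; [apply subspace_separable, Hau|].
  intros xs h Hxs Hh. now apply subspace_one_sided.
Qed.

End Subspace.

Theorem proposition2p4 :
  (forall (X : NormedSpace), Banach X ->
     (exists Q : nat -> X -> X, is_1UFDD X Q /\ shrinking_FDD X Q) ->
     has_au_star X) /\
  (forall (Y : NormedSpace), Banach Y -> separable Y -> has_au_star Y ->
     (forall (P : Y -> Prop) (HP : closed_subspace Y P),
        has_au_star (subspace Y P HP)) /\
     (forall (Z : Y -> Prop), closed_subspace Y Z ->
        forall (Q : NormedSpace) (q : Y -> Q), Banach Q ->
          is_quotient_map Y Z Q q -> has_au_star Q)).
Proof.
  split.
  - intros X _ [Q [HU HS]]. apply au_from_one_sided.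
    + exact (FDD_separable X Q (proj1 HU)).
    + exact (shrinking_1UFDD_one_sided X Q HU HS).
  - intros Y HB _ Hau. split.
    + intros P HP. exact (subspace_au_star Y P HP HB Hau).
    + intros Z _ Q q _ Hq. exact (quotient_au_star Y Z Q q Hq Hau).
Qed.
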